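(* Let $n>k\ge1$ be coprime integers, $\eta$ in the upper half-plane, $\Lambda=\mathbb{Z}+\mathbb{Z}\eta$. For every $m\in\mathbb{Z}$, $\lim_{\tau\to0}R_\tau(m\tau)=\mathrm{sym}_m$, where $\mathrm{sym}_m\in\mathrm{End}(V\otimes V)$ is defined by $\mathrm{sym}_m(v\otimes v')=v\otimes v'-m\,v'\otimes v$ (the limit taken over $\tau\in\mathbb{C}\setminus\frac1n\Lambda$ tending to $0$).
   Context: Write $e(z)=e^{2\pi i z}$ and $\theta(z)=\sum_{m\in\mathbb{Z}}(-1)^m e\big(mz+\tfrac12 m(m-1)\eta\big)$. For $\alpha\in\mathbb{Z}$ put $\theta_\alpha(z)=e\big(\alpha z+\tfrac{\alpha}{2n}+\tfrac{\alpha(\alpha-n)}{2n}\eta\big)\prod_{m=0}^{n-1}\theta\big(z+\tfrac mn+\tfrac{\alpha}{n}\eta\big)$, regarded as indexed by $\alpha\in\mathbb{Z}_n$. Let $V$ be an $n$-dimensional complex vector space with basis $x_i$, $i\in\mathbb{Z}_n$. For $\tau\in\mathbb{C}\setminus\frac1n\Lambda$ and $z\in\mathbb{C}$, define $R_\tau(z)\in\mathrm{End}(V\otimes V)$ by $$R_\tau(z)(x_i\otimes x_j)=\frac{\theta_0(-z)\cdots\theta_{n-1}(-z)}{\theta_1(0)\cdots\theta_{n-1}(0)}\sum_{r\in\mathbb{Z}_n}\frac{\theta_{j-i+r(k-1)}(-z+\tau)}{\theta_{j-i-r}(-z)\,\theta_{kr}(\tau)}\,x_{j-r}\otimes x_{i+r}.$$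 *)

From Stdlib Require Import Reals ZArith List.
From Coquelicot Require Export Coquelicot.
Import ListNotations.
Open Scope R_scope.

Definition Cseries (a : nat -> C) : C :=
  (Series (fun p => Re (a p)), Series (fun p => Im (a p))).

Definition Zrange (N : Z) : list Z := map Z.of_nat (seq 0 (Z.to_nat N)).
Definition Csum (l : list Z) (f : Z -> C) : C :=
  fold_right (fun x acc => Cplus (f x) acc) (RtoC 0) l.
Definition Cprod (l : list Z) (f : Z -> C) : C :=
  fold_right (fun x acc => Cmult (f x) acc) (RtoC 1) l.

(* e(z) = exp(2 pi i z) *)
Definition ee (z : C) : C :=
  Cmult (RtoC (exp (- (2 * PI * Im z))))
        (cos (2 * PI * Re z), sin (2 * PI * Re z)).

Definition sgnZ (m : Z) : C := if Z.even m then RtoC 1 else RtoC (-1).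

(* theta(z) = sum_{m in Z} (-1)^m e(m z + m(m-1)/2 eta),
   split as the sum over m >= 0 plus the sum over m <= -1. *)
Definition theta_term (eta z : C) (m : Z) : C :=
  Cmult (sgnZ m)
        (ee (Cplus (Cmult (RtoC (IZR m)) z)
                   (Cmult (RtoC (IZR (m * (m - 1)) / 2)) eta))).

Definition theta (eta z : C) : C :=
  Cplus (Cseries (fun p => theta_term eta z (Z.of_nat p)))
        (Cseries (fun p => theta_term eta z (- Z.of_nat (S p)))%Z).

Definition theta_alpha (n : Z) (eta : C) (alpha : Z) (z : C) : C :=
  Cmult
    (ee (Cplus (Cplus (Cmult (RtoC (IZR alpha)) z)
                      (RtoC (IZR alpha / (2 * IZR n))))
               (Cmult (RtoC (IZR (alpha * (alpha - n)) / (2 * IZR n))) eta)))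
    (Cprod (Zrange n) (fun m =>
       theta eta (Cplus (Cplus z (RtoC (IZR m / IZR n)))
                        (Cmult (RtoC (IZR alpha / IZR n)) eta)))).

(* theta_alpha indexed by alpha in Z_n: we use the representative in {0..n-1}. *)
Definition thetaZn (n : Z) (eta : C) (alpha : Z) (z : C) : C :=
  theta_alpha n eta (alpha mod n)%Z z.

Definition eqmod (n x y : Z) : bool := Z.eqb (x mod n)%Z (y mod n)%Z.

Definition ind (b : bool) : C := if b then RtoC 1 else RtoC 0.

(* Scalar coefficient c_r(z) in R_tau(z)(x_i (x) x_j) = sum_r c_r(z) x_{j-r} (x) x_{i+r}.
   The factor theta_0(-z)...theta_{n-1}(-z) / theta_{j-i-r}(-z) is written with the
   factor theta_{j-i-r}(-z) cancelled (product over beta <> j-i-r mod n). *)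
Definition Rcoeff (n k : Z) (eta tau z : C) (i j r : Z) : C :=
  Cmult
    (Cdiv (Cprod (filter (fun beta => negb (eqmod n beta (j - i - r)%Z)) (Zrange n))
                 (fun beta => thetaZn n eta beta (Copp z)))
          (Cprod (map Z.succ (Zrange (n - 1))) (fun beta => thetaZn n eta beta (RtoC 0))))
    (Cdiv (thetaZn n eta (j - i + r * (k - 1))%Z (Cplus (Copp z) tau))
          (thetaZn n eta (k * r)%Z tau)).

(* Matrix entry of R_tau(z) in the basis x_a (x) x_b of V (x) V:
   coefficient of x_a (x) x_b in R_tau(z)(x_i (x) x_j). Indices are taken mod n. *)
Definition Rmat (n k : Z) (eta tau z : C) (i j a b : Z) : C :=
  Csum (Zrange n) (fun r =>
    Cmult (Rcoeff n k eta tau z i j r)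
          (ind (eqmod n a (j - r)%Z && eqmod n b (i + r)%Z))).

Definition symmat (n m : Z) (i j a b : Z) : C :=
  Cminus (ind (eqmod n a i && eqmod n b j))
         (Cmult (RtoC (IZR m)) (ind (eqmod n a j && eqmod n b i))).

Definition in_lattice_n (n : Z) (eta tau : C) : Prop :=
  exists p q : Z,
    tau = Cmult (RtoC (/ IZR n)) (Cplus (RtoC (IZR p)) (Cmult (RtoC (IZR q)) eta)).

(** Along [z = m tau], every coefficient of [R_tau(m tau)] is built from values
    [theta_beta(c tau)], [c] in [{-m, 1-m, 1}], and the constant [theta_1(0) ... theta_(n-1)(0)].
    As [tau -> 0] each [theta_beta] with [beta <> 0 (mod n)] tends to a nonzero value
    (for [beta = k r] this uses [gcd(n, k) = 1]), whereas [theta_0] has a simple zero at [0]: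
    [theta(z) = (e(z) - 1) h(z)] ([h = theta_quot]) with [h(0) <> 0], so [theta_0(a tau) / theta_0(tau) -> a].
    Counting the factors [theta_0] in numerator and denominator gives the limits
    [1], [1 - m], [-m] and [0], i.e. the entries of [sym_m].
    The needed nonvanishing of [theta] comes from the Jacobi triple product: the finite identity
    [prod_(k<N) (1 - x q^k)(1 - x^-1 q^(k+1)) = sum_m [2N; N+m]_q (-1)^m q^(m(m-1)/2) x^m],
    passed to the limit by dominated convergence, bounds [|theta(w)|] from below by a positive
    multiple of [|1 - e(w)|] on every circle [|e(w)| = rho] with [|q| < rho < 1/|q|]. *)

From Pilot Require Import Defs.
From Stdlib Require Import Reals ZArith List Lia Lra.
From Coquelicot Require Import Coquelicot.
Open Scope R_scope.

Ltac C_by_parts :=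
  apply injective_projections; unfold Cminus, Cplus, Cmult, Copp, RtoC, Re, Im; simpl;
  first [ring | (unfold Rdiv; ring) | field].

Lemma Cmod_le_Rabs_Re_Im (z : C) : Cmod z <= Rabs (Re z) + Rabs (Im z).
Proof.
  destruct z as [a b]; unfold Cmod; simpl.
  pose proof (Rabs_pos a); pose proof (Rabs_pos b).
  rewrite <- (sqrt_square (Rabs a + Rabs b)) by lra.
  apply sqrt_le_1; [nra | nra |].
  pose proof (Rsqr_abs a); pose proof (Rsqr_abs b). unfold Rsqr in *. nra.
Qed.

Lemma Rabs_Im_le_Cmod (z : C) : Rabs (Im z) <= Cmod z.
Proof.
  pose proof (Rmax_Cmod z). pose proof (Rmax_r (Rabs (Re z)) (Rabs (Im z))).
  destruct z; simpl in *. lra.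
Qed.

Lemma Cmod_one_minus_ge (z : C) : 1 - Cmod z <= Cmod (1 - z).
Proof.
  pose proof (Cmod_triangle (1 - z) z) as H.
  replace (1 - z + z)%C with (RtoC 1) in H by ring. rewrite Cmod_1 in H. lra.
Qed.

Lemma Cmod_one_minus_le (z : C) : Cmod (1 - z) <= 1 + Cmod z.
Proof. pose proof (Cmod_triangle 1 (- z)) as H. rewrite Cmod_1, Cmod_opp in H. exact H. Qed.

Lemma exp_le x y : x <= y -> exp x <= exp y.
Proof. intros [H|H]; [left; apply exp_increasing | subst]; lra. Qed.

Lemma exp_mult_INR x p : exp (x * INR p) = exp x ^ p.
Proof.
  induction p as [|p IH]; [simpl; rewrite Rmult_0_r; apply exp_0|].
  rewrite S_INR, <- tech_pow_Rmult, <- IH, <- exp_plus. f_equal; ring.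
Qed.

Lemma Cmod_ee z : Cmod (ee z) = exp (- (2 * PI * Im z)).
Proof.
  unfold ee. rewrite Cmod_mult, Cmod_R, Rabs_pos_eq by (left; apply exp_pos).
  unfold Cmod; simpl. pose proof (sin2_cos2 (2 * PI * Re z)) as Hsc. unfold Rsqr in Hsc.
  rewrite !Rmult_1_r, Rplus_comm, Hsc, sqrt_1. ring.
Qed.

Lemma ee_neq0 z : ee z <> 0.
Proof.
  intro E. pose proof (Cmod_ee z) as H. rewrite E, Cmod_0 in H.
  pose proof (exp_pos (- (2 * PI * Im z))). lra.
Qed.

Lemma ee_plus u v : ee (u + v) = (ee u * ee v)%C.
Proof.
  destruct u as [a b], v as [c d]. unfold ee; simpl.
  replace (- (2 * PI * (b + d))) with (- (2 * PI * b) + - (2 * PI * d)) by ring.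
  replace (2 * PI * (a + c)) with (2 * PI * a + 2 * PI * c) by ring.
  rewrite exp_plus, cos_plus, sin_plus. C_by_parts.
Qed.

Lemma ee_0 : ee 0 = 1.
Proof.
  unfold ee; simpl. rewrite Rmult_0_r, Ropp_0, exp_0, cos_0, sin_0. C_by_parts.
Qed.

Lemma ee_opp u : ee (- u) = (/ ee u)%C.
Proof.
  assert (E : (ee (- u) * ee u)%C = 1).
  { rewrite <- ee_plus. replace (- u + u)%C with (RtoC 0) by ring. apply ee_0. }
  rewrite <- (Cmult_1_l (/ ee u)), <- E. field. apply ee_neq0.
Qed.

Lemma ee_eq1_Im w : ee w = 1 -> Im w = 0.
Proof.
  intro E. pose proof (Cmod_ee w) as H. rewrite E, Cmod_1, <- exp_0 in H.
  apply exp_inv in H. pose proof PI_RGT_0. nra.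
Qed.

Lemma ee_real w : Im w = 0 -> ee w = (cos (2 * PI * Re w), sin (2 * PI * Re w)).
Proof. intro H. unfold ee. rewrite H, Rmult_0_r, Ropp_0, exp_0. C_by_parts. Qed.

Lemma ee_neq1_Im_pos w : 0 < Im w -> ee w <> 1.
Proof. intros H E. apply ee_eq1_Im in E. lra. Qed.

Lemma ee_neq1_real w : Im w = 0 -> 0 < Re w < 1 -> ee w <> 1.
Proof.
  intros HI HR E. rewrite ee_real in E by exact HI.
  injection E as Ecos Esin. pose proof PI_RGT_0.
  destruct (sin_eq_O_2PI_0 (2 * PI * Re w)) as [A|[A|A]]; try nra.
  rewrite A, cos_PI in Ecos. lra.
Qed.

Lemma ee_neq1_small w : Cmod w < 1/4 -> w <> 0 -> ee w <> 1.
Proof.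
  intros Hw Hn E. pose proof (ee_eq1_Im w E) as HI.
  rewrite ee_real in E by exact HI. injection E as _ Esin.
  pose proof (re_le_Cmod w). pose proof PI_RGT_0.
  destruct (Rtotal_order (Re w) 0) as [Hl|[He|Hg]].
  - assert (0 < sin (- (2 * PI * Re w))) by (apply sin_gt_0; unfold Rabs in *; destruct Rcase_abs; nra).
    rewrite sin_neg in H1. lra.
  - apply Hn. destruct w; simpl in *; subst. reflexivity.
  - assert (0 < sin (2 * PI * Re w)) by (apply sin_gt_0; unfold Rabs in *; destruct Rcase_abs; nra).
    lra.
Qed.

Definition Clim {X} (F : (X -> Prop) -> Prop) (f : X -> C) (L : C) :=
  forall eps, 0 < eps -> F (fun y => Cmod (f y - L) < eps).

Definition Rlim {X} (F : (X -> Prop) -> Prop) (f : X -> R) (L : R) :=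
  forall eps, 0 < eps -> F (fun y => Rabs (f y - L) < eps).

Definition cnbhd (z0 : C) (P : C -> Prop) :=
  exists d, 0 < d /\ forall z, Cmod (z - z0) < d -> P z.

Definition Ccontinuous (f : C -> C) (z0 : C) := Clim (cnbhd z0) f (f z0).

#[global] Instance cnbhd_filter z0 : Filter (cnbhd z0).
Proof.
  constructor.
  - exists 1; split; [lra | auto].
  - intros P Q [d1 [H1 P1]] [d2 [H2 P2]]. exists (Rmin d1 d2); split; [apply Rmin_pos; auto|].
    intros z Hz. pose proof (Rmin_l d1 d2); pose proof (Rmin_r d1 d2).
    split; [apply P1 | apply P2]; lra.
  - intros P Q HPQ [d [Hd HP]]. exists d; split; auto.
Qed.

Section ClimAlgebra.
Context {X : Type} {F : (X -> Prop) -> Prop} {FF : Filter F}.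

Lemma Clim_const c : Clim F (fun _ => c) c.
Proof.
  intros e He. apply filter_forall. intros _.
  replace (c - c)%C with (RtoC 0) by ring. rewrite Cmod_0; auto.
Qed.

Lemma Clim_ext_loc f g L : F (fun y => f y = g y) -> Clim F f L -> Clim F g L.
Proof.
  intros Hfg Hf e He. generalize (@filter_and _ F FF _ _ Hfg (Hf e He)).
  apply filter_imp. intros y [<- H]; auto.
Qed.

Lemma Clim_ext f g L : (forall y, f y = g y) -> Clim F f L -> Clim F g L.
Proof. intro H. apply Clim_ext_loc, filter_forall, H. Qed.

Lemma Clim_eq_limit f L L' : L = L' -> Clim F f L -> Clim F f L'.
Proof. intros ->; auto. Qed.

Lemma Clim_plus f g L M :
  Clim F f L -> Clim F g M -> Clim F (fun y => f y + g y)%C (L + M)%C.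
Proof.
  intros Hf Hg e He. generalize (@filter_and _ F FF _ _ (Hf (e/2) ltac:(lra)) (Hg (e/2) ltac:(lra))).
  apply filter_imp. intros y [A B].
  replace (f y + g y - (L + M))%C with (f y - L + (g y - M))%C by ring.
  pose proof (Cmod_triangle (f y - L) (g y - M)). lra.
Qed.

Lemma Clim_opp f L : Clim F f L -> Clim F (fun y => - f y)%C (- L)%C.
Proof.
  intros H e He. generalize (H e He). apply filter_imp. intros y A.
  replace (- f y - - L)%C with (- (f y - L))%C by ring. rewrite Cmod_opp; auto.
Qed.

Lemma Clim_minus f g L M :
  Clim F f L -> Clim F g M -> Clim F (fun y => f y - g y)%C (L - M)%C.
Proof. intros. apply Clim_plus, Clim_opp; auto. Qed.

Lemma Clim_bounded f L : Clim F f L -> F (fun y => Cmod (f y) <= Cmod L + 1).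
Proof.
  intro H. generalize (H 1 Rlt_0_1). apply filter_imp. intros y A.
  replace (f y) with (f y - L + L)%C by ring.
  pose proof (Cmod_triangle (f y - L) L). lra.
Qed.

Lemma Clim_mult f g L M :
  Clim F f L -> Clim F g M -> Clim F (fun y => f y * g y)%C (L * M)%C.
Proof.
  intros Hf Hg e He.
  set (K := Cmod L + Cmod M + 2).
  assert (HK : 0 < K) by (unfold K; pose proof (Cmod_ge_0 L); pose proof (Cmod_ge_0 M); lra).
  generalize (@filter_and _ F FF _ _ (Clim_bounded g M Hg)
               (@filter_and _ F FF _ _ (Hf (e / K) ltac:(apply Rdiv_lt_0_compat; lra))
                               (Hg (e / K) ltac:(apply Rdiv_lt_0_compat; lra)))).
  apply filter_imp. intros y [Bg [A B]].
  replace (f y * g y - L * M)%C with ((f y - L) * g y + L * (g y - M))%C by ring.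
  eapply Rle_lt_trans; [apply Cmod_triangle|]. rewrite !Cmod_mult.
  pose proof (Cmod_ge_0 (f y - L)); pose proof (Cmod_ge_0 L); pose proof (Cmod_ge_0 (g y)).
  apply Rle_lt_trans with (e / K * (Cmod M + 1) + Cmod L * (e / K)).
  - apply Rplus_le_compat; [apply Rmult_le_compat|apply Rmult_le_compat_l]; lra.
  - replace (e / K * (Cmod M + 1) + Cmod L * (e / K)) with (e - e / K) by (unfold K; field; lra).
    assert (0 < e / K) by (apply Rdiv_lt_0_compat; lra). lra.
Qed.

Lemma Clim_inv (g : X -> C) (M : C) : M <> 0 -> Clim F g M -> Clim F (fun y => / g y)%C (/ M)%C.
Proof.
  intros HM H e He.
  assert (Hm : 0 < Cmod M) by (apply Cmod_gt_0; auto).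
  set (d := Rmin (Cmod M / 2) (e * Cmod M * Cmod M / 2)).
  assert (Hd : 0 < d)
    by (apply Rmin_pos; [lra | apply Rdiv_lt_0_compat; [repeat apply Rmult_lt_0_compat|]; lra]).
  generalize (H d Hd). apply filter_imp. intros y A.
  pose proof (Rmin_l (Cmod M / 2) (e * Cmod M * Cmod M / 2)) as B1.
  pose proof (Rmin_r (Cmod M / 2) (e * Cmod M * Cmod M / 2)) as B2. fold d in B1, B2.
  assert (Hg : Cmod M / 2 <= Cmod (g y)).
  { pose proof (Cmod_triangle (g y) (M - g y)) as T.
    replace (g y + (M - g y))%C with M in T by ring.
    replace (M - g y)%C with (- (g y - M))%C in T by ring. rewrite Cmod_opp in T. lra. }
  assert (Hgn : g y <> 0) by (intro E; rewrite E, Cmod_0 in Hg; lra).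
  replace (/ g y - / M)%C with (- (g y - M) / (g y * M))%C by (field; auto).
  rewrite Cmod_div by (apply Cmult_neq_0; auto). rewrite Cmod_opp, Cmod_mult.
  apply Rmult_lt_reg_r with (Cmod (g y) * Cmod M); [apply Rmult_lt_0_compat; lra|].
  unfold Rdiv. rewrite Rmult_assoc, Rinv_l, Rmult_1_r by (apply Rgt_not_eq, Rmult_lt_0_compat; lra).
  apply Rlt_le_trans with (e * Cmod M * Cmod M / 2); [lra|].
  replace (e * Cmod M * Cmod M / 2) with (e * (Cmod M / 2 * Cmod M)) by field.
  apply Rmult_le_compat_l; [lra|]. apply Rmult_le_compat_r; lra.
Qed.

Lemma Clim_div (f g : X -> C) (L M : C) :
  M <> 0 -> Clim F f L -> Clim F g M -> Clim F (fun y => f y / g y)%C (L / M)%C.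
Proof. intros. apply Clim_mult; [|apply Clim_inv]; auto. Qed.

Lemma Clim_comp_continuous (g : X -> C) (f : C -> C) z0 :
  Clim F g z0 -> Ccontinuous f z0 -> Clim F (fun y => f (g y)) (f z0).
Proof.
  intros Hg Hf e He. destruct (Hf e He) as [d [Hd Hfd]].
  generalize (Hg d Hd). apply filter_imp. intros y A. apply Hfd; auto.
Qed.

Lemma Clim_Cprod (l : list Z) (f : X -> Z -> C) (L : Z -> C) :
  (forall b, In b l -> Clim F (fun y => f y b) (L b)) ->
  Clim F (fun y => Cprod l (f y)) (Cprod l L).
Proof.
  induction l as [|b l IH]; simpl; intro H; [apply Clim_const|].
  apply Clim_mult; auto.
Qed.

Lemma Clim_Csum (l : list Z) (f : X -> Z -> C) (L : Z -> C) :
  (forall b, In b l -> Clim F (fun y => f y b) (L b)) ->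
  Clim F (fun y => Csum l (f y)) (Csum l L).
Proof.
  induction l as [|b l IH]; simpl; intro H; [apply Clim_const|].
  apply Clim_plus; auto.
Qed.

Lemma Clim_RtoC (f : X -> R) L : Rlim F f L -> Clim F (fun y => RtoC (f y)) (RtoC L).
Proof.
  intros H e He. generalize (H e He). apply filter_imp. intros y A.
  rewrite <- RtoC_minus, Cmod_R. exact A.
Qed.

Lemma Clim_of_Re_Im (f : X -> C) L :
  Rlim F (fun y => Re (f y)) (Re L) -> Rlim F (fun y => Im (f y)) (Im L) -> Clim F f L.
Proof.
  intros H1 H2 e He. generalize (@filter_and _ F FF _ _ (H1 (e/2) ltac:(lra)) (H2 (e/2) ltac:(lra))).
  apply filter_imp. intros y [A B].
  eapply Rle_lt_trans; [apply Cmod_le_Rabs_Re_Im|].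
  destruct (f y), L; simpl in *. unfold Rminus in A, B. lra.
Qed.

End ClimAlgebra.

Lemma Cmod_ge_of_Clim_eventually (s : nat -> C) L kappa :
  Clim eventually s L -> eventually (fun N => kappa <= Cmod (s N)) -> kappa <= Cmod L.
Proof.
  intros Hs [N0 HN0]. destruct (Rle_lt_dec kappa (Cmod L)) as [|Hlt]; auto.
  destruct (Hs (kappa - Cmod L) ltac:(lra)) as [N1 HN1].
  specialize (HN0 (max N0 N1) (Nat.le_max_l _ _)). specialize (HN1 (max N0 N1) (Nat.le_max_r _ _)).
  pose proof (Cmod_triangle (s (max N0 N1) - L) L) as T.
  replace (s (max N0 N1) - L + L)%C with (s (max N0 N1)) in T by ring. lra.
Qed.

Lemma Cmod_ge_of_Ccontinuous (f : C -> C) z0 kappa : Ccontinuous f z0 ->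
  (forall d, 0 < d -> exists z, Cmod (z - z0) < d /\ kappa <= Cmod (f z)) -> kappa <= Cmod (f z0).
Proof.
  intros Hf Hnear. destruct (Rle_lt_dec kappa (Cmod (f z0))) as [|Hlt]; auto.
  destruct (Hf (kappa - Cmod (f z0)) ltac:(lra)) as [d [Hd Hfd]].
  destruct (Hnear d Hd) as [z [Hz Hk]]. specialize (Hfd z Hz).
  pose proof (Cmod_triangle (f z - f z0) (f z0)) as T.
  replace (f z - f z0 + f z0)%C with (f z) in T by ring. lra.
Qed.

Lemma Ccontinuous_const c z0 : Ccontinuous (fun _ => c) z0.
Proof. apply Clim_const. Qed.

Lemma Ccontinuous_id z0 : Ccontinuous (fun z => z) z0.
Proof. intros e He. exists e; split; auto. Qed.

Lemma Ccontinuous_plus f g z0 :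
  Ccontinuous f z0 -> Ccontinuous g z0 -> Ccontinuous (fun z => f z + g z)%C z0.
Proof. intros. apply Clim_plus; auto. Qed.

Lemma Ccontinuous_mult f g z0 :
  Ccontinuous f z0 -> Ccontinuous g z0 -> Ccontinuous (fun z => f z * g z)%C z0.
Proof. intros. apply Clim_mult; auto. Qed.

Lemma Ccontinuous_comp f g z0 :
  Ccontinuous g z0 -> Ccontinuous f (g z0) -> Ccontinuous (fun z => f (g z)) z0.
Proof. intros. apply (Clim_comp_continuous g f); auto. Qed.

Lemma Ccontinuous_scal (a : C) z0 : Ccontinuous (fun z => a * z)%C z0.
Proof. apply Ccontinuous_mult; [apply Ccontinuous_const | apply Ccontinuous_id]. Qed.

Lemma Ccontinuous_affine (b : C) z0 : Ccontinuous (fun z => z + b)%C z0.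
Proof. apply Ccontinuous_plus; [apply Ccontinuous_id | apply Ccontinuous_const]. Qed.

Lemma Rlim_comp_continuity_pt {X} {F : (X -> Prop) -> Prop} {FF : Filter F} (f : X -> R) (g : R -> R) L :
  Rlim F f L -> continuity_pt g L -> Rlim F (fun y => g (f y)) (g L).
Proof.
  intros Hf Hg e He. destruct (Hg e He) as [d [Hd Hgd]].
  generalize (Hf d Hd). apply filter_imp. intros y Hy.
  destruct (Req_dec (f y) L) as [->|E]; [rewrite Rminus_eq_0, Rabs_R0; auto|].
  apply (Hgd (f y)). split; [split; [exact I | auto] | exact Hy].
Qed.

Lemma Rlim_scal_Lipschitz (p : C -> R) (k : R) z0 :
  (forall u v, Rabs (p u - p v) <= Cmod (u - v)) -> Rlim (cnbhd z0) (fun z => k * p z) (k * p z0).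
Proof.
  intros Hp e He. pose proof (Rabs_pos k).
  exists (e / (Rabs k + 1)). split; [apply Rdiv_lt_0_compat; lra|]. intros z Hz.
  rewrite <- Rmult_minus_distr_l, Rabs_mult. pose proof (Hp z z0). pose proof (Rabs_pos (p z - p z0)).
  apply Rle_lt_trans with ((Rabs k + 1) * Cmod (z - z0)); [nra|].
  apply Rmult_lt_compat_l with (r := Rabs k + 1) in Hz; [|lra].
  replace ((Rabs k + 1) * (e / (Rabs k + 1))) with e in Hz by (field; lra). exact Hz.
Qed.

Lemma ee_continuous z0 : Ccontinuous ee z0.
Proof.
  assert (HRe : forall u v, Rabs (Re u - Re v) <= Cmod (u - v)).
  { intros u v. replace (Re u - Re v) with (Re (u - v)) by (destruct u, v; simpl; ring).
    apply re_le_Cmod. }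
  assert (HIm : forall u v, Rabs (Im u - Im v) <= Cmod (u - v)).
  { intros u v. replace (Im u - Im v) with (Im (u - v)) by (destruct u, v; simpl; ring).
    apply Rabs_Im_le_Cmod. }
  assert (Eee : forall z, ee z = (exp (- (2 * PI) * Im z)
                                  * (cos (2 * PI * Re z) + Ci * sin (2 * PI * Re z)))%C).
  { intro z. unfold ee, Ci. rewrite Ropp_mult_distr_l. C_by_parts. }
  unfold Ccontinuous. rewrite Eee. apply (Clim_ext _ _ _ (fun z => eq_sym (Eee z))).
  apply Clim_mult; [|apply Clim_plus; [|apply Clim_mult; [apply Clim_const|]]]; apply Clim_RtoC;
    apply Rlim_comp_continuity_pt; try apply Rlim_scal_Lipschitz; auto.
  - apply derivable_continuous_pt, derivable_pt_exp.
  - apply continuity_cos.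
  - apply continuity_sin.
Qed.

(** * Dominated convergence for series (Tannery's theorem) *)

Lemma ex_series_dominated (a b : nat -> R) :
  (forall n, Rabs (a n) <= b n) -> ex_series b -> ex_series a.
Proof. intros H Hb. apply (ex_series_le a b); auto. Qed.

Lemma Rabs_Series_le (a b : nat -> R) :
  (forall n, Rabs (a n) <= b n) -> ex_series b -> Rabs (Series a) <= Series b.
Proof.
  intros H Hb.
  assert (Ha : ex_series (fun n => Rabs (a n))).
  { apply (ex_series_dominated _ b); auto. intro n; rewrite Rabs_Rabsolu; auto. }
  eapply Rle_trans; [apply Series_Rabs; auto|]. apply Series_le; auto.
  intro n; split; [apply Rabs_pos | auto].
Qed.

Lemma Series_tail_small (g : nat -> R) : ex_series g -> forall e, 0 < e ->
  exists N, Rabs (Series (fun k => g (S N + k)%nat)) < e.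
Proof.
  intros Hg e He. pose proof (Series_correct _ Hg) as H. apply is_series_Reals in H.
  destruct (H e He) as [N HN]. exists N.
  rewrite (Series_incr_n g (S N)) in HN by (lia || auto).
  specialize (HN N (le_n _)). unfold Rdist in HN. simpl pred in HN.
  replace (sum_f_R0 g N - (sum_f_R0 g N + Series (fun k => g (S N + k)%nat))) with
    (- Series (fun k => g (S N + k)%nat)) in HN by ring.
  rewrite Rabs_Ropp in HN; auto.
Qed.

Section Tannery.
Context {X : Type} {F : (X -> Prop) -> Prop} {FF : Filter F}.

Lemma Rlim_partial_sum_abs_diff (f : X -> nat -> R) (h : nat -> R) :
  (forall p, Rlim F (fun y => f y p) (h p)) ->
  forall e, 0 < e -> forall N,
    F (fun y => sum_f_R0 (fun k => Rabs (f y k - h k)) N < (INR N + 1) * e).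
Proof.
  intros Hl e He N. induction N as [|N IH].
  - generalize (Hl 0%nat e He). apply filter_imp. intros y A. simpl. lra.
  - generalize (filter_and _ _ IH (Hl (S N) e He)). apply filter_imp. intros y [A B].
    simpl sum_f_R0. rewrite S_INR. lra.
Qed.

Lemma Rlim_Series_dominated (f : X -> nat -> R) (h g : nat -> R) :
  ex_series g ->
  (forall p, Rlim F (fun y => f y p) (h p)) ->
  (forall p, Rabs (h p) <= g p) ->
  F (fun y => forall p, Rabs (f y p) <= g p) ->
  Rlim F (fun y => Series (f y)) (Series h).
Proof.
  intros Hg Hl Hh Hb e He.
  destruct (Series_tail_small g Hg (e/4) ltac:(lra)) as [N HN].
  assert (He' : 0 < e / (4 * (INR N + 1))) by (apply Rdiv_lt_0_compat; pose proof (pos_INR N); lra).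
  generalize (filter_and _ _ Hb (Rlim_partial_sum_abs_diff f h Hl _ He' N)).
  apply filter_imp. intros y [B HS].
  assert (Hgt : ex_series (fun k => g (S N + k)%nat)) by (apply ex_series_incr_n; auto).
  rewrite (Series_incr_n (f y) (S N)), (Series_incr_n h (S N))
    by (lia || apply (ex_series_dominated _ g); auto). simpl pred.
  assert (T1 : Rabs (Series (fun k => f y (S N + k)%nat)) <= Series (fun k => g (S N + k)%nat))
    by (apply Rabs_Series_le; auto).
  assert (T2 : Rabs (Series (fun k => h (S N + k)%nat)) <= Series (fun k => g (S N + k)%nat))
    by (apply Rabs_Series_le; auto).
  assert (T3 : Rabs (sum_f_R0 (f y) N - sum_f_R0 h N) <= sum_f_R0 (fun k => Rabs (f y k - h k)) N)
    by (rewrite <- minus_sum; apply sum_f_R0_triangle).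
  replace ((INR N + 1) * (e / (4 * (INR N + 1)))) with (e / 4) in HS
    by (field; pose proof (pos_INR N); lra).
  pose proof (Rle_abs (Series (fun k => g (S N + k)%nat))).
  match goal with |- Rabs ?d < _ =>
    replace d with ((sum_f_R0 (f y) N - sum_f_R0 h N) + Series (fun k => f y (S N + k)%nat)
                    - Series (fun k => h (S N + k)%nat)) by ring end.
  eapply Rle_lt_trans; [apply Rabs_triang|]. rewrite Rabs_Ropp.
  eapply Rle_lt_trans; [apply Rplus_le_compat_r, Rabs_triang|]. lra.
Qed.

Lemma Clim_Cseries_dominated (f : X -> nat -> C) (h : nat -> C) (g : nat -> R) :
  ex_series g ->
  (forall p, Clim F (fun y => f y p) (h p)) ->
  (forall p, Cmod (h p) <= g p) ->
  F (fun y => forall p, Cmod (f y p) <= g p) ->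
  Clim F (fun y => Cseries (f y)) (Cseries h).
Proof.
  intros Hg Hl Hh Hb.
  assert (Hpart : forall P : C -> R, (forall z, Rabs (P z) <= Cmod z) ->
            (forall u v, P (u - v)%C = P u - P v) ->
            Rlim F (fun y => Series (fun p => P (f y p))) (Series (fun p => P (h p)))).
  { intros P HP Hlin. apply Rlim_Series_dominated with g; auto.
    - intros p e He. generalize (Hl p e He). apply filter_imp. intros y A.
      rewrite <- Hlin. eapply Rle_lt_trans; [apply HP | exact A].
    - intro p. eapply Rle_trans; [apply HP | auto].
    - generalize Hb. apply filter_imp. intros y A p. eapply Rle_trans; [apply HP | auto]. }
  apply Clim_of_Re_Im; apply Hpart; try apply re_le_Cmod; try apply Rabs_Im_le_Cmod;
    intros [] []; simpl; ring.
Qed.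

End Tannery.

Definition ex_Cseries (a : nat -> C) :=
  ex_series (fun p => Re (a p)) /\ ex_series (fun p => Im (a p)).

Lemma ex_Cseries_dominated (a : nat -> C) (g : nat -> R) :
  (forall p, Cmod (a p) <= g p) -> ex_series g -> ex_Cseries a.
Proof.
  intros H Hg. split; apply (ex_series_dominated _ g); auto; intro p; eapply Rle_trans;
    [apply re_le_Cmod | auto | apply Rabs_Im_le_Cmod | auto].
Qed.

Lemma ex_Cseries_incr_1 (a : nat -> C) : ex_Cseries a -> ex_Cseries (fun p => a (S p)).
Proof. intros [H1 H2]; split; apply (ex_series_incr_1 (fun p => _ (a p))); auto. Qed.

Lemma Cseries_ext (a b : nat -> C) : (forall p, a p = b p) -> Cseries a = Cseries b.
Proof. intro H. unfold Cseries. f_equal; apply Series_ext; intro p; rewrite H; auto. Qed.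

Lemma Cseries_incr_1 (a : nat -> C) :
  ex_Cseries a -> Cseries a = (a 0%nat + Cseries (fun p => a (S p)))%C.
Proof.
  intros [H1 H2]. unfold Cseries. rewrite (Series_incr_1 _ H1), (Series_incr_1 _ H2).
  destruct (a 0%nat); reflexivity.
Qed.

Lemma Cseries_plus (a b : nat -> C) : ex_Cseries a -> ex_Cseries b ->
  Cseries (fun p => a p + b p)%C = (Cseries a + Cseries b)%C.
Proof.
  intros [A1 A2] [B1 B2]. unfold Cseries, Cplus; simpl.
  rewrite <- !Series_plus; auto.
Qed.

Lemma Cseries_scal (c : C) (a : nat -> C) :
  ex_Cseries a -> Cseries (fun p => c * a p)%C = (c * Cseries a)%C.
Proof.
  intros [A1 A2]. destruct c as [cr ci]. unfold Cseries, Cmult; simpl.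
  assert (Hs : forall (k : R) (u : nat -> R), ex_series u -> ex_series (fun p => k * u p))
    by (intros; apply (ex_series_scal_l k u); auto).
  f_equal; [rewrite Series_minus | rewrite Series_plus]; auto; rewrite !Series_scal_l; reflexivity.
Qed.

Fixpoint Cpartial (n : nat) (a : nat -> C) : C :=
  match n with O => 0 | S k => (Cpartial k a + a k)%C end.

Lemma Cpartial_S_first k (a : nat -> C) :
  Cpartial (S k) a = (a 0%nat + Cpartial k (fun p => a (S p)))%C.
Proof.
  induction k as [|k IH]; [simpl; ring|].
  change (Cpartial (S (S k)) a) with (Cpartial (S k) a + a (S k))%C.
  rewrite IH. simpl. ring.
Qed.

Lemma ex_series_eventually_0 (u : nat -> R) n : (forall p, (n <= p)%nat -> u p = 0) -> ex_series u.
Proof.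
  intro H. apply (ex_series_incr_n u n).
  apply (ex_series_ext (fun k => 0 * (/ 2) ^ k)); [intro k; rewrite H by lia; apply Rmult_0_l|].
  apply (ex_series_scal_l 0 (fun k => (/ 2) ^ k)), ex_series_geom. rewrite Rabs_pos_eq; lra.
Qed.

Lemma Cseries_finite n : forall a : nat -> C,
  (forall p, (n <= p)%nat -> a p = 0) -> Cseries a = Cpartial n a.
Proof.
  induction n as [|n IH]; intros a H.
  - unfold Cseries. rewrite (Series_ext _ (fun _ => 0)), (Series_ext (fun p => Im (a p)) (fun _ => 0)).
    + rewrite (Series_ext (fun _ => 0) (fun _ => 0 * 0)) by (intro; ring).
      rewrite Series_scal_l, Rmult_0_l. reflexivity.
    + intro p; rewrite H by lia; reflexivity.
    + intro p; rewrite H by lia; reflexivity.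
  - rewrite Cseries_incr_1, Cpartial_S_first, IH; auto.
    + intros p Hp. apply H. lia.
    + split; apply (ex_series_eventually_0 _ (S n)); intros p Hp; rewrite H by auto; reflexivity.
Qed.

Definition gauss_bound (a b : R) (p : nat) : R := exp (a * INR p - b * INR p ^ 2).

Lemma ex_series_gauss_bound a b : 0 < b -> ex_series (gauss_bound a b).
Proof.
  intro Hb. set (K := exp ((a + 1) ^ 2 / (4 * b))).
  apply (ex_series_dominated _ (fun p => K * exp (-1) ^ p)).
  - intro p. unfold gauss_bound. rewrite Rabs_pos_eq by (left; apply exp_pos).
    rewrite <- exp_mult_INR. unfold K. rewrite <- exp_plus. apply exp_le.
    (* complete the square: [b x^2 - (a+1) x + (a+1)^2/(4b) >= 0] *)
    set (x := INR p).
    assert (0 <= b * (x - (a + 1) / (2 * b)) ^ 2) by (apply Rmult_le_pos; [lra | apply pow2_ge_0]).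
    assert (b * (x - (a + 1) / (2 * b)) ^ 2 = b * x ^ 2 - (a + 1) * x + (a + 1) ^ 2 / (4 * b))
      by (field; lra).
    lra.
  - apply (ex_series_scal_l K (fun p => exp (-1) ^ p)). apply ex_series_geom.
    rewrite Rabs_pos_eq by (left; apply exp_pos). rewrite <- exp_0. apply exp_increasing. lra.
Qed.

Lemma ex_series_scal_gauss_bound c a b : 0 < b -> ex_series (fun p => c * gauss_bound a b p).
Proof. intro Hb. apply (ex_series_scal_l c (gauss_bound a b)), ex_series_gauss_bound, Hb. Qed.

Lemma Cmod_sgnZ m : Cmod (sgnZ m) = 1.
Proof. unfold sgnZ. destruct (Z.even m); rewrite Cmod_R, ?Rabs_R1, ?Rabs_m1; auto. Qed.

Lemma sgnZ_opp m : sgnZ (- m) = sgnZ m.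
Proof. unfold sgnZ. rewrite Z.even_opp. reflexivity. Qed.

Lemma sgnZ_add1 m : sgnZ (m + 1) = (- sgnZ m)%C.
Proof.
  unfold sgnZ. rewrite Z.add_1_r, Z.even_succ, <- Z.negb_even.
  destruct (Z.even m); simpl; C_by_parts.
Qed.

Lemma sgnZ_sub1 m : sgnZ (m - 1) = (- sgnZ m)%C.
Proof.
  unfold sgnZ. rewrite Z.sub_1_r, Z.even_pred, <- Z.negb_even.
  destruct (Z.even m); simpl; C_by_parts.
Qed.

Lemma Cmod_theta_term eta z m : Cmod (theta_term eta z m) =
  exp (- (2 * PI * (IZR m * Im z + IZR (m * (m - 1)) / 2 * Im eta))).
Proof.
  unfold theta_term. rewrite Cmod_mult, Cmod_sgnZ, Cmod_ee, Rmult_1_l.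
  destruct z, eta; simpl. do 3 f_equal. ring.
Qed.

Lemma Rabs_le_linear x M t : Rabs x <= M -> 0 <= t -> - (M * t) <= t * x <= M * t.
Proof. intros H Ht. unfold Rabs in H; destruct (Rcase_abs x); split; nra. Qed.

Lemma Cmod_theta_term_nonneg_le eta z M p : Rabs (Im z) <= M ->
  Cmod (theta_term eta z (Z.of_nat p)) <= gauss_bound (2 * PI * M + PI * Im eta) (PI * Im eta) p.
Proof.
  intro HM. rewrite Cmod_theta_term. unfold gauss_bound. apply exp_le.
  rewrite mult_IZR, minus_IZR, <- INR_IZR_INZ.
  pose proof (pos_INR p). pose proof PI_RGT_0.
  pose proof (Rabs_le_linear (Im z) M (INR p) HM ltac:(lra)). simpl. nra.
Qed.

Lemma Cmod_theta_term_neg_le eta z M p : Rabs (Im z) <= M -> 0 < Im eta ->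
  Cmod (theta_term eta z (- Z.of_nat (S p)))
  <= exp (2 * PI * M) * gauss_bound (2 * PI * M) (PI * Im eta) p.
Proof.
  intros HM He. rewrite Cmod_theta_term. unfold gauss_bound. rewrite <- exp_plus. apply exp_le.
  rewrite mult_IZR, minus_IZR, opp_IZR, <- INR_IZR_INZ, S_INR.
  pose proof (pos_INR p). pose proof PI_RGT_0.
  pose proof (Rabs_le_linear (Im z) M (INR p + 1) HM ltac:(lra)).
  assert (0 <= PI * Im eta * (3 * INR p + 2)) by (apply Rmult_le_pos; [apply Rmult_le_pos|]; lra).
  simpl. nra.
Qed.

Lemma ex_Cseries_theta_term_nonneg eta z :
  0 < Im eta -> ex_Cseries (fun p => theta_term eta z (Z.of_nat p)).
Proof.
  intro He. eapply ex_Cseries_dominated; [intro p; apply Cmod_theta_term_nonneg_le, Rle_refl|].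
  apply ex_series_gauss_bound. pose proof PI_RGT_0. nra.
Qed.

Lemma ex_Cseries_theta_term_neg eta z :
  0 < Im eta -> ex_Cseries (fun p => theta_term eta z (- Z.of_nat (S p))).
Proof.
  intro He. eapply ex_Cseries_dominated; [intro p; apply Cmod_theta_term_neg_le; [apply Rle_refl | auto]|].
  apply ex_series_scal_gauss_bound. pose proof PI_RGT_0. nra.
Qed.

Fixpoint ee_geom (n : nat) (z : C) : C :=
  match n with O => 0 | S k => (ee_geom k z + ee (INR k * z))%C end.

Lemma ee_geom_mul n z : ((ee z - 1) * ee_geom n z)%C = (ee (INR n * z) - 1)%C.
Proof.
  induction n as [|n IH]; simpl ee_geom.
  - replace (INR 0 * z)%C with (RtoC 0) by C_by_parts. rewrite ee_0. ring.
  - rewrite Cmult_plus_distr_l, IH.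
    replace (INR (S n) * z)%C with (z + INR n * z)%C by (rewrite S_INR; C_by_parts).
    rewrite ee_plus. ring.
Qed.

Lemma ee_geom_at_0 n : ee_geom n 0 = INR n.
Proof.
  induction n as [|n IH]; simpl ee_geom; [reflexivity|].
  rewrite IH. replace (INR n * 0)%C with (RtoC 0) by C_by_parts. rewrite ee_0, S_INR. C_by_parts.
Qed.

Lemma ee_geom_continuous n z0 : Ccontinuous (ee_geom n) z0.
Proof.
  induction n as [|n IH]; simpl; [apply Ccontinuous_const|].
  apply Ccontinuous_plus; auto.
  apply (Ccontinuous_comp ee (fun z => INR n * z)%C); [apply Ccontinuous_scal | apply ee_continuous].
Qed.

Lemma Cmod_ee_scal_le (a : R) z M : Rabs (Im z) <= M -> Cmod (ee (a * z)) <= exp (2 * PI * M * Rabs a).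
Proof.
  intro HM. rewrite Cmod_ee. apply exp_le. destruct z as [x y]; simpl in *.
  pose proof PI_RGT_0. pose proof (Rabs_pos y). pose proof (Rabs_pos a).
  assert (- (a * y) <= Rabs a * M).
  { eapply Rle_trans; [apply Rle_abs|]. rewrite Rabs_Ropp, Rabs_mult. apply Rmult_le_compat_l; lra. }
  replace (a * y + 0 * x) with (a * y) by ring. nra.
Qed.

Lemma Cmod_ee_geom_le n z M : Rabs (Im z) <= M -> Cmod (ee_geom n z) <= INR n * exp (2 * PI * M * INR n).
Proof.
  intro HM. assert (0 <= M) by (pose proof (Rabs_pos (Im z)); lra). pose proof PI_RGT_0.
  induction n as [|n IH]; simpl ee_geom; [rewrite Cmod_0; simpl; lra|].
  eapply Rle_trans; [apply Cmod_triangle|].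
  pose proof (Cmod_ee_scal_le (INR n) z M HM) as E. rewrite Rabs_pos_eq in E by apply pos_INR.
  rewrite S_INR. pose proof (pos_INR n).
  assert (exp (2 * PI * M * INR n) <= exp (2 * PI * M * (INR n + 1))) by (apply exp_le; nra).
  pose proof (exp_pos (2 * PI * M * INR n)). nra.
Qed.

(** Pairing the terms [m = p + 1] and [m = -p] of the theta series exhibits the factor [e(z) - 1]. *)
Definition theta_quot_term (eta z : C) (p : nat) : C :=
  (sgnZ (Z.of_nat (S p)) * ee ((INR p * (INR p + 1) / 2)%R * eta) * ee (- INR p * z)
   * ee_geom (2 * p + 1) z)%C.

Definition theta_quot (eta z : C) : C := Cseries (theta_quot_term eta z).

Lemma theta_term_pair eta z p :
  (theta_term eta z (Z.of_nat (S p)) + theta_term eta z (- Z.of_nat p))%C =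
  ((ee z - 1) * theta_quot_term eta z p)%C.
Proof.
  unfold theta_term, theta_quot_term.
  set (c := ((INR p * (INR p + 1) / 2)%R * eta)%C).
  replace (IZR (Z.of_nat (S p)) * z + (IZR (Z.of_nat (S p) * (Z.of_nat (S p) - 1)) / 2)%R * eta)%C
    with (c + (- INR p * z + INR (2 * p + 1) * z))%C.
  2:{ unfold c. rewrite mult_IZR, minus_IZR, <- INR_IZR_INZ, S_INR, plus_INR, mult_INR.
      simpl (INR 2). simpl (INR 1). C_by_parts. }
  replace (IZR (- Z.of_nat p) * z + (IZR (- Z.of_nat p * (- Z.of_nat p - 1)) / 2)%R * eta)%C
    with (c + - INR p * z)%C.
  2:{ unfold c. rewrite mult_IZR, minus_IZR, opp_IZR, <- INR_IZR_INZ. C_by_parts. }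
  rewrite !ee_plus, sgnZ_opp, Nat2Z.inj_succ, <- Z.add_1_r, sgnZ_add1.
  replace (ee (INR (2 * p + 1) * z)) with ((ee z - 1) * ee_geom (2 * p + 1) z + 1)%C
    by (rewrite ee_geom_mul; ring).
  ring.
Qed.

Lemma Cmod_theta_quot_term_le eta z M p : Rabs (Im z) <= M -> 0 < Im eta ->
  Cmod (theta_quot_term eta z p) <= exp (2 * PI * M) * gauss_bound (6 * PI * M + 2) (PI * Im eta) p.
Proof.
  intros HM He. assert (HM0 : 0 <= M) by (pose proof (Rabs_pos (Im z)); lra).
  pose proof (pos_INR p) as Hp. pose proof PI_RGT_0.
  unfold theta_quot_term. rewrite !Cmod_mult, Cmod_sgnZ, Rmult_1_l.
  assert (E1 : Cmod (ee ((INR p * (INR p + 1) / 2)%R * eta)) = exp (- (PI * Im eta * (INR p ^ 2 + INR p))))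
    by (rewrite Cmod_ee; f_equal; destruct eta; simpl; field).
  pose proof (Cmod_ee_scal_le (- INR p) z M HM) as E2.
  rewrite Rabs_Ropp, Rabs_pos_eq in E2 by apply pos_INR.
  pose proof (Cmod_ee_geom_le (2 * p + 1) z M HM) as E3.
  rewrite plus_INR, mult_INR in E3. simpl (INR 2) in E3. simpl (INR 1) in E3.
  assert (E4 : (1 + 1) * INR p + 1 <= exp (2 * INR p)) by (pose proof (exp_ineq1_le (2 * INR p)); lra).
  replace (- INR p * z)%C with ((- INR p)%R * z)%C by C_by_parts.
  rewrite E1.
  apply Rle_trans with (exp (- (PI * Im eta * (INR p ^ 2 + INR p))) * exp (2 * PI * M * INR p)
                        * (exp (2 * INR p) * exp (2 * PI * M * ((1 + 1) * INR p + 1)))).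
  - pose proof (Cmod_ge_0 (ee ((- INR p)%R * z))).
    pose proof (exp_pos (- (PI * Im eta * (INR p ^ 2 + INR p)))).
    apply Rmult_le_compat; try apply Rmult_le_pos; try apply Cmod_ge_0; try lra.
    + apply Rmult_le_compat_l; lra.
    + eapply Rle_trans; [apply E3|]. apply Rmult_le_compat_r; [left; apply exp_pos | exact E4].
  - unfold gauss_bound. rewrite <- !exp_plus. apply exp_le.
    assert (0 <= PI * Im eta * INR p) by (apply Rmult_le_pos; [apply Rmult_le_pos|]; lra).
    nra.
Qed.

Lemma ex_Cseries_theta_quot_term eta z : 0 < Im eta -> ex_Cseries (theta_quot_term eta z).
Proof.
  intro He. eapply ex_Cseries_dominated; [intro p; apply Cmod_theta_quot_term_le; [apply Rle_refl | auto]|].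
  apply ex_series_scal_gauss_bound. pose proof PI_RGT_0. nra.
Qed.

Lemma theta_eq_mul_quot eta z : 0 < Im eta -> theta eta z = ((ee z - 1) * theta_quot eta z)%C.
Proof.
  intro He. unfold theta, theta_quot.
  pose proof (ex_Cseries_theta_term_nonneg eta z He) as Hpos.
  pose proof (ex_Cseries_theta_term_neg eta z He) as Hneg.
  assert (Hneg0 : ex_Cseries (fun p => theta_term eta z (- Z.of_nat p)))
    by (split; apply (ex_series_incr_1 (fun p => _ (theta_term eta z (- Z.of_nat p)))); apply Hneg).
  rewrite <- Cseries_scal by (apply ex_Cseries_theta_quot_term; auto).
  rewrite <- (Cseries_ext _ _ (theta_term_pair eta z)).
  rewrite Cseries_plus by (auto; apply (ex_Cseries_incr_1 _ Hpos)).
  rewrite (Cseries_incr_1 _ Hpos), (Cseries_incr_1 _ Hneg0).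
  replace (- Z.of_nat 0)%Z with (Z.of_nat 0) by reflexivity. ring.
Qed.

Lemma Ccontinuous_Cseries (f : C -> nat -> C) z0 (g : nat -> R) d : 0 < d -> ex_series g ->
  (forall p, Ccontinuous (fun z => f z p) z0) ->
  (forall z p, Cmod (z - z0) < d -> Cmod (f z p) <= g p) ->
  Ccontinuous (fun z => Cseries (f z)) z0.
Proof.
  intros Hd Hg Hc Hb. apply (Clim_Cseries_dominated f (f z0) g); auto.
  - intro p. apply Hb. replace (z0 - z0)%C with (RtoC 0) by ring. rewrite Cmod_0; auto.
  - exists d; split; auto.
Qed.

Lemma Rabs_Im_near z z0 : Cmod (z - z0) < 1 -> Rabs (Im z) <= Rabs (Im z0) + 1.
Proof.
  intro H. pose proof (Rabs_Im_le_Cmod (z - z0)) as H'.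
  replace (Im (z - z0)) with (Im z - Im z0) in H' by (destruct z, z0; simpl; ring).
  pose proof (Rabs_triang_inv (Im z) (Im z0)). lra.
Qed.

Lemma theta_quot_continuous eta z0 : 0 < Im eta -> Ccontinuous (theta_quot eta) z0.
Proof.
  intro He. set (M := Rabs (Im z0) + 1).
  apply (Ccontinuous_Cseries _ z0
           (fun p => exp (2 * PI * M) * gauss_bound (6 * PI * M + 2) (PI * Im eta) p) 1).
  - lra.
  - apply ex_series_scal_gauss_bound. pose proof PI_RGT_0. nra.
  - intro p. unfold theta_quot_term.
    apply Ccontinuous_mult; [apply Ccontinuous_mult; [apply Ccontinuous_const|] | apply ee_geom_continuous].
    apply (Ccontinuous_comp ee (fun z => - INR p * z)%C); [apply Ccontinuous_scal | apply ee_continuous].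
  - intros z p Hz. apply Cmod_theta_quot_term_le; auto. apply Rabs_Im_near; auto.
Qed.

Lemma theta_continuous eta z0 : 0 < Im eta -> Ccontinuous (theta eta) z0.
Proof.
  intro He. unfold Ccontinuous. rewrite (theta_eq_mul_quot eta z0 He).
  apply (Clim_ext (fun z => (ee z - 1) * theta_quot eta z)%C);
    [intro z; symmetry; apply theta_eq_mul_quot, He|].
  apply (Ccontinuous_mult (fun z => ee z - 1)%C (theta_quot eta));
    [apply Ccontinuous_plus; [apply ee_continuous | apply Ccontinuous_const]
    | apply theta_quot_continuous, He].
Qed.

Fixpoint prod_one_minus (a : nat -> C) (N : nat) : C :=
  match N with O => 1 | S k => (prod_one_minus a k * (1 - a k))%C end.

Lemma prod_one_minus_S_first (a : nat -> C) N :
  prod_one_minus a (S N) = ((1 - a 0%nat) * prod_one_minus (fun k => a (S k)) N)%C.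
Proof.
  induction N as [|N IH]; [simpl; ring|].
  change (prod_one_minus a (S (S N))) with (prod_one_minus a (S N) * (1 - a (S N)))%C.
  rewrite IH. simpl. ring.
Qed.

Lemma one_minus_ge_exp t T : 0 <= t <= T -> T < 1 -> exp (- (t / (1 - T))) <= 1 - t.
Proof.
  intros Ht HT. set (s := t / (1 - T)).
  assert (Hs : 0 <= s) by (unfold s; apply Rmult_le_pos; [lra | left; apply Rinv_0_lt_compat; lra]).
  assert (Hst : s * (1 - T) = t) by (unfold s; field; lra).
  pose proof (exp_ineq1_le s). rewrite exp_Ropp.
  apply Rle_trans with (/ (1 + s)); [apply Rinv_le_contravar; lra|].
  apply Rmult_le_reg_r with (1 + s); [lra|]. rewrite Rinv_l by lra. nra.
Qed.

Lemma pow_le_1 r N : 0 <= r <= 1 -> r ^ N <= 1.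
Proof. intro Hr. rewrite <- (pow1 N). apply pow_incr. lra. Qed.

Lemma geom_partial_le r N : 0 <= r < 1 -> 0 <= r * (1 - r ^ N) / (1 - r) <= r / (1 - r).
Proof.
  intro Hr. pose proof (pow_le r N ltac:(lra)). pose proof (pow_le_1 r N ltac:(lra)).
  assert (0 < / (1 - r)) by (apply Rinv_0_lt_compat; lra).
  unfold Rdiv. split; [apply Rmult_le_pos; [apply Rmult_le_pos|]; lra|].
  apply Rmult_le_compat_r; [lra|]. nra.
Qed.

Lemma geom_partial_S r N : r < 1 ->
  r * (1 - r ^ S N) / (1 - r) = r * (1 - r ^ N) / (1 - r) + r ^ S N.
Proof. intro Hr. simpl. field. lra. Qed.

Definition prod_lower_bound (c r : R) : R := exp (- (c / (1 - c * r) * (r / (1 - r)))).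

Lemma Cmod_prod_one_minus_ge (a : nat -> C) c r N :
  0 <= c -> 0 <= r < 1 -> c * r < 1 -> (forall k, Cmod (a k) <= c * r ^ S k) ->
  prod_lower_bound c r <= Cmod (prod_one_minus a N).
Proof.
  intros Hc Hr Hcr Ha.
  assert (HK : 0 <= c / (1 - c * r)) by (apply Rmult_le_pos; [lra | left; apply Rinv_0_lt_compat; lra]).
  apply Rle_trans with (exp (- (c / (1 - c * r) * (r * (1 - r ^ N) / (1 - r))))).
  { apply exp_le, Ropp_le_contravar, Rmult_le_compat_l, geom_partial_le; auto. }
  induction N as [|N IH].
  - simpl. rewrite Rminus_diag, Rmult_0_r, Rdiv_0_l, Rmult_0_r, Ropp_0, exp_0, Cmod_1. lra.
  - simpl prod_one_minus.
    rewrite Cmod_mult, geom_partial_S, Rmult_plus_distr_l, Ropp_plus_distr, exp_plus by lra.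
    pose proof (Ha N). pose proof (Cmod_one_minus_ge (a N)).
    assert (Hrk : 0 <= r ^ S N <= r).
    { pose proof (pow_le r N ltac:(lra)). pose proof (pow_le_1 r N ltac:(lra)). simpl. nra. }
    assert (Hf : exp (- (c / (1 - c * r) * r ^ S N)) <= 1 - c * r ^ S N).
    { replace (- (c / (1 - c * r) * r ^ S N)) with (- (c * r ^ S N / (1 - c * r))) by (field; lra).
      apply one_minus_ge_exp; [split; nra | lra]. }
    apply Rmult_le_compat; try (left; apply exp_pos); auto. lra.
Qed.

Lemma Cmod_prod_one_minus_le (a : nat -> C) c r N :
  0 <= c -> 0 <= r < 1 -> (forall k, Cmod (a k) <= c * r ^ S k) ->
  Cmod (prod_one_minus a N) <= exp (c * (r / (1 - r))).
Proof.
  intros Hc Hr Ha.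
  apply Rle_trans with (exp (c * (r * (1 - r ^ N) / (1 - r)))).
  2:{ apply exp_le, Rmult_le_compat_l, geom_partial_le; auto. }
  induction N as [|N IH].
  - simpl. rewrite Rminus_diag, Rmult_0_r, Rdiv_0_l, Rmult_0_r, exp_0, Cmod_1. lra.
  - simpl prod_one_minus. rewrite Cmod_mult, geom_partial_S, Rmult_plus_distr_l, exp_plus by lra.
    pose proof (Ha N). pose proof (Cmod_one_minus_le (a N)).
    apply Rmult_le_compat; auto using Cmod_ge_0.
    pose proof (exp_ineq1_le (c * r ^ S N)). lra.
Qed.

(** * The finite Jacobi triple product *)

Fixpoint Zsum (lo : Z) (len : nat) (f : Z -> C) : C :=
  match len with O => 0 | S l => (f lo + Zsum (lo + 1) l f)%C end.

Lemma Zsum_ext lo len (f g : Z -> C) : (forall m, f m = g m) -> Zsum lo len f = Zsum lo len g.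
Proof. revert lo; induction len; intros lo H; simpl; auto. rewrite H, IHlen; auto. Qed.

Lemma Zsum_plus lo len (f g : Z -> C) :
  Zsum lo len (fun m => f m + g m)%C = (Zsum lo len f + Zsum lo len g)%C.
Proof. revert lo; induction len; intros lo; simpl; [ring | rewrite IHlen; ring]. Qed.

Lemma Zsum_scal lo len (c : C) (f : Z -> C) : Zsum lo len (fun m => c * f m)%C = (c * Zsum lo len f)%C.
Proof. revert lo; induction len; intros lo; simpl; [ring | rewrite IHlen; ring]. Qed.

Lemma Zsum_shift lo len (f : Z -> C) c : Zsum lo len (fun m => f (m + c)%Z) = Zsum (lo + c) len f.
Proof.
  revert lo; induction len; intros lo; simpl; auto.
  rewrite IHlen. replace (lo + 1 + c)%Z with (lo + c + 1)%Z by lia. reflexivity.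
Qed.

Lemma Zsum_last lo len (f : Z -> C) : Zsum lo (S len) f = (Zsum lo len f + f (lo + Z.of_nat len)%Z)%C.
Proof.
  revert lo; induction len as [|len IH]; intros lo.
  - simpl. rewrite Z.add_0_r. ring.
  - change (Zsum lo (S (S len)) f) with (f lo + Zsum (lo + 1) (S len) f)%C.
    rewrite IH. simpl. replace (lo + 1 + Z.of_nat len)%Z with (lo + Z.pos (Pos.of_succ_nat len))%Z by lia.
    ring.
Qed.

Lemma Zsum_zero lo len (f : Z -> C) :
  (forall m, (lo <= m < lo + Z.of_nat len)%Z -> f m = 0) -> Zsum lo len f = 0.
Proof.
  revert lo; induction len; intros lo H; simpl; auto.
  rewrite H, IHlen; [ring | intros m Hm; apply H | ]; lia.
Qed.

Lemma Zsum_single lo len (f : Z -> C) c : (lo <= c < lo + Z.of_nat len)%Z ->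
  (forall m, m <> c -> f m = 0) -> Zsum lo len f = f c.
Proof.
  revert lo; induction len; intros lo Hc H; [simpl in Hc; lia|]. simpl.
  destruct (Z.eq_dec lo c) as [->|Hn].
  - rewrite Zsum_zero; [ring|]. intros m Hm. apply H. lia.
  - rewrite H, IHlen by (auto || lia). ring.
Qed.

Lemma Zsum_pred_shift lo len (f : Z -> C) : f (lo - 1)%Z = 0 -> f (lo + Z.of_nat len - 1)%Z = 0 ->
  Zsum lo len (fun m => f (m - 1)%Z) = Zsum lo len f.
Proof.
  intros H1 H2. destruct len as [|len]; [reflexivity|].
  rewrite (Zsum_ext _ _ _ (fun m => f (m + -1)%Z)) by (intro; f_equal; lia).
  rewrite Zsum_shift, (Zsum_last lo len).
  change (Zsum (lo + -1) (S len) f) with (f (lo + -1)%Z + Zsum (lo + -1 + 1) len f)%C.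
  replace (lo + -1 + 1)%Z with lo by lia. replace (lo + -1)%Z with (lo - 1)%Z by lia.
  replace (lo + Z.of_nat len)%Z with (lo + Z.of_nat (S len) - 1)%Z by lia.
  rewrite H1, H2. ring.
Qed.

Lemma Zsum_succ_shift lo len (f : Z -> C) : f lo = 0 -> f (lo + Z.of_nat len)%Z = 0 ->
  Zsum lo len (fun m => f (m + 1)%Z) = Zsum lo len f.
Proof.
  intros H1 H2. destruct len as [|len]; [reflexivity|].
  rewrite Zsum_shift, (Zsum_last (lo + 1) len).
  change (Zsum lo (S len) f) with (f lo + Zsum (lo + 1) len f)%C.
  replace (lo + 1 + Z.of_nat len)%Z with (lo + Z.of_nat (S len))%Z by lia.
  rewrite H1, H2. ring.
Qed.

Lemma Zsum_symmetric_split K (G : Z -> C) : Zsum (- Z.of_nat K) (2 * K + 1) G =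
  (Cpartial (S K) (fun p => G (Z.of_nat p)) + Cpartial K (fun p => G (- Z.of_nat (S p))%Z))%C.
Proof.
  induction K as [|K IH]; [simpl; ring|].
  replace (2 * S K + 1)%nat with (S (S (2 * K + 1))) by lia.
  change (Zsum (- Z.of_nat (S K)) (S (S (2 * K + 1))) G) with
    (G (- Z.of_nat (S K))%Z + Zsum (- Z.of_nat (S K) + 1) (S (2 * K + 1)) G)%C.
  rewrite Zsum_last. replace (- Z.of_nat (S K) + 1)%Z with (- Z.of_nat K)%Z by lia.
  rewrite IH. replace (- Z.of_nat K + Z.of_nat (2 * K + 1))%Z with (Z.of_nat (S K)) by lia.
  cbn [Cpartial]. ring.
Qed.

Section QSeries.
Variable eta : C.
Hypothesis Heta : 0 < Im eta.

(** [qpow j] is [q^j] for the nome [q = e(eta)]; [qabs] is [|q| < 1]. *)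
Definition qpow (j : Z) : C := ee (IZR j * eta).

Definition qabs : R := exp (- (2 * PI * Im eta)).

Lemma qpow_plus a b : qpow (a + b) = (qpow a * qpow b)%C.
Proof. unfold qpow. rewrite <- ee_plus. f_equal. rewrite plus_IZR. C_by_parts. Qed.

Lemma qpow_0 : qpow 0 = 1.
Proof. unfold qpow. replace (IZR 0 * eta)%C with (RtoC 0) by C_by_parts. apply ee_0. Qed.

Lemma qpow_neq0 a : qpow a <> 0.
Proof. apply ee_neq0. Qed.

Lemma qabs_pos : 0 < qabs.
Proof. apply exp_pos. Qed.

Lemma qabs_lt_1 : qabs < 1.
Proof. unfold qabs. rewrite <- exp_0. apply exp_increasing. pose proof PI_RGT_0. nra. Qed.

Lemma Cmod_qpow a : Cmod (qpow a) = exp (- (2 * PI * Im eta) * IZR a).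
Proof. unfold qpow. rewrite Cmod_ee. f_equal. destruct eta; simpl. ring. Qed.

Lemma Cmod_qpow_nat k : Cmod (qpow (Z.of_nat k)) = qabs ^ k.
Proof. rewrite Cmod_qpow, <- INR_IZR_INZ, exp_mult_INR. reflexivity. Qed.

Lemma one_minus_qpow_neq0 k : (0 < k)%Z -> (1 - qpow k)%C <> 0.
Proof.
  intros Hk E. apply Ceq_minus in E. replace k with (Z.of_nat (Z.to_nat k)) in E by lia.
  apply (f_equal Cmod) in E. rewrite Cmod_qpow_nat, Cmod_1 in E.
  pose proof qabs_pos. pose proof qabs_lt_1.
  assert (qabs ^ Z.to_nat k < 1) by (apply pow_lt_1_compat; [lra | lia]). lra.
Qed.

(** The q-Pochhammer symbol [(q;q)_N] and [1/(q;q)_j], extended by [0] to [j < 0]. *)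
Definition qpoch (N : nat) : C := prod_one_minus (fun k => qpow (Z.of_nat (S k))) N.

Definition qpoch_inv (j : Z) : C := if (j <? 0)%Z then 0 else (/ qpoch (Z.to_nat j))%C.

Lemma qpoch_S k : qpoch (S k) = (qpoch k * (1 - qpow (Z.of_nat (S k))))%C.
Proof. reflexivity. Qed.

Lemma qpoch_neq0 k : qpoch k <> 0.
Proof.
  induction k as [|k IH]; [apply C1_nz|].
  rewrite qpoch_S. apply Cmult_neq_0; auto. apply one_minus_qpow_neq0. lia.
Qed.

Lemma qpoch_inv_neg j : (j < 0)%Z -> qpoch_inv j = 0.
Proof. intro H. unfold qpoch_inv. apply Z.ltb_lt in H. rewrite H. reflexivity. Qed.

Lemma qpoch_inv_nat k : qpoch_inv (Z.of_nat k) = (/ qpoch k)%C.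
Proof.
  unfold qpoch_inv. destruct (Z.ltb_spec (Z.of_nat k) 0); [lia|]. rewrite Nat2Z.id. reflexivity.
Qed.

Lemma qpoch_inv_rec j : qpoch_inv j = ((1 - qpow (j + 1)) * qpoch_inv (j + 1))%C.
Proof.
  destruct (Z_lt_le_dec j (-1)) as [H|H]; [rewrite !qpoch_inv_neg by lia; ring|].
  destruct (Z.eq_dec j (-1)) as [->|Hn].
  - rewrite qpoch_inv_neg by lia. simpl (-1 + 1)%Z. rewrite qpow_0. ring.
  - replace j with (Z.of_nat (Z.to_nat j)) by lia.
    replace (Z.of_nat (Z.to_nat j) + 1)%Z with (Z.of_nat (S (Z.to_nat j))) by lia.
    rewrite !qpoch_inv_nat, qpoch_S.
    field. split; [apply one_minus_qpow_neq0; lia | apply qpoch_neq0].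
Qed.

Definition qtri (m : Z) : C := ee ((IZR (m * (m - 1)) / 2)%R * eta).

Lemma qtri_sub1 m : qtri (m - 1) = (qtri m * qpow (1 - m))%C.
Proof. unfold qtri, qpow. rewrite <- ee_plus. f_equal. rewrite !mult_IZR, !minus_IZR. C_by_parts. Qed.

Lemma qtri_add1 m : qtri (m + 1) = (qtri m * qpow m)%C.
Proof.
  unfold qtri, qpow. rewrite <- ee_plus. f_equal. rewrite !mult_IZR, !minus_IZR, plus_IZR. C_by_parts.
Qed.

Definition jtp_coef (N : nat) (m : Z) : C :=
  (qpoch (2 * N) * qpoch_inv (Z.of_nat N + m) * qpoch_inv (Z.of_nat N - m) * sgnZ m * qtri m)%C.

Definition jtp_prod (N : nat) (w : C) : C :=
  (prod_one_minus (fun k => ee w * qpow (Z.of_nat k)) N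
   * prod_one_minus (fun k => ee (- w) * qpow (Z.of_nat (S k))) N)%C.

Lemma jtp_prod_S N w : jtp_prod (S N) w =
  (jtp_prod N w * (1 - ee w * qpow (Z.of_nat N)) * (1 - ee (- w) * qpow (Z.of_nat N + 1)))%C.
Proof.
  unfold jtp_prod. cbn [prod_one_minus].
  replace (Z.of_nat (S N)) with (Z.of_nat N + 1)%Z by lia. ring.
Qed.

Lemma jtp_coef_0 m : jtp_coef 0 m = if (m =? 0)%Z then 1 else 0.
Proof.
  unfold jtp_coef. destruct (Z.eqb_spec m 0) as [->|Hm].
  - unfold qpoch_inv, qtri, sgnZ, qpoch. simpl.
    replace ((0 / 2)%R * eta)%C with (RtoC 0) by C_by_parts. rewrite ee_0. field.
  - destruct (Z_lt_le_dec m 0); [rewrite (qpoch_inv_neg (Z.of_nat 0 + m)) by lia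
                                 | rewrite (qpoch_inv_neg (Z.of_nat 0 - m)) by lia]; ring.
Qed.

Lemma jtp_coef_out N m : (Z.of_nat N < m \/ m < - Z.of_nat N)%Z -> jtp_coef N m = 0.
Proof.
  intros [H|H]; unfold jtp_coef.
  - rewrite (qpoch_inv_neg (Z.of_nat N - m)) by lia. ring.
  - rewrite (qpoch_inv_neg (Z.of_nat N + m)) by lia. ring.
Qed.

Lemma jtp_coef_S N m :
  jtp_coef (S N) m =
  ((1 + qpow (2 * Z.of_nat N + 1)) * jtp_coef N m - qpow (Z.of_nat N) * jtp_coef N (m - 1)
   - qpow (Z.of_nat N + 1) * jtp_coef N (m + 1))%C.
Proof.
  unfold jtp_coef. set (n := Z.of_nat N).
  rewrite qtri_sub1, qtri_add1, sgnZ_sub1, sgnZ_add1.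
  replace (Z.of_nat (S N)) with (n + 1)%Z by (unfold n; lia).
  replace (2 * S N)%nat with (S (S (2 * N))) by lia. rewrite !qpoch_S.
  replace (Z.of_nat (S (2 * N))) with (2 * n + 1)%Z by (unfold n; lia).
  replace (Z.of_nat (S (S (2 * N)))) with (2 * n + 2)%Z by (unfold n; lia).
  (* express every [qpoch_inv] through [qpoch_inv (n + m + 1)] and [qpoch_inv (n - m + 1)] *)
  rewrite (qpoch_inv_rec (n + m)), (qpoch_inv_rec (n - m)),
    (qpoch_inv_rec (n + (m - 1))), (qpoch_inv_rec (n + (m - 1) + 1)),
    (qpoch_inv_rec (n - (m + 1))), (qpoch_inv_rec (n - (m + 1) + 1)).
  replace (n + (m - 1) + 1 + 1)%Z with (n + m + 1)%Z by lia.
  replace (n - (m + 1) + 1 + 1)%Z with (n - m + 1)%Z by lia.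
  replace (n - (m - 1))%Z with (n - m + 1)%Z by lia.
  replace (n + (m + 1))%Z with (n + m + 1)%Z by lia.
  replace (n + 1 + m)%Z with (n + m + 1)%Z by lia.
  replace (n + 1 - m)%Z with (n - m + 1)%Z by lia.
  replace (n + (m - 1) + 1)%Z with (n + m)%Z by lia.
  replace (n - (m + 1) + 1)%Z with (n - m)%Z by lia.
  set (p := qpow 1). set (Q := qpow n). set (u := qpow m).
  assert (Hu : u <> 0) by apply qpow_neq0.
  assert (Ev : qpow (- m) = (/ u)%C).
  { rewrite <- (Cmult_1_l (/ u)), <- qpow_0. replace 0%Z with (- m + m)%Z by lia.
    rewrite qpow_plus. fold u. field. exact Hu. }
  assert (E1 : qpow (2 * n + 1) = (p * (Q * Q))%C) by (unfold p, Q; rewrite <- !qpow_plus; f_equal; lia).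
  assert (E2 : qpow (2 * n + 2) = (p * (p * (Q * Q)))%C) by (unfold p, Q; rewrite <- !qpow_plus; f_equal; lia).
  assert (E3 : qpow (n + m + 1) = (Q * (u * p))%C) by (unfold p, Q, u; rewrite <- !qpow_plus; f_equal; lia).
  assert (E4 : qpow (n - m + 1) = (Q * (qpow (- m) * p))%C) by (unfold p, Q; rewrite <- !qpow_plus; f_equal; lia).
  assert (E5 : qpow (n + m) = (Q * u)%C) by (unfold Q, u; rewrite <- !qpow_plus; f_equal; lia).
  assert (E6 : qpow (n - m) = (Q * qpow (- m))%C) by (unfold Q; rewrite <- !qpow_plus; f_equal; lia).
  assert (E7 : qpow (1 - m) = (p * qpow (- m))%C) by (unfold p; rewrite <- !qpow_plus; f_equal; lia).
  assert (E8 : qpow (n + 1) = (Q * p)%C) by (unfold p, Q; rewrite <- !qpow_plus; f_equal; lia).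
  rewrite E1, E2, E3, E4, E5, E6, E7, E8, Ev. field. exact Hu.
Qed.

Theorem jtp_prod_eq_Zsum w N K : (N <= K)%nat ->
  jtp_prod N w = Zsum (- Z.of_nat K) (2 * K + 1) (fun m => jtp_coef N m * ee (IZR m * w))%C.
Proof.
  revert K. induction N as [|N IH]; intros K HK.
  - rewrite (Zsum_single _ _ _ 0%Z);
      [| lia | intros m Hm; rewrite jtp_coef_0; destruct (Z.eqb_spec m 0); [lia | ring]].
    rewrite jtp_coef_0. simpl. replace (0 * w)%C with (RtoC 0) by C_by_parts.
    rewrite ee_0. unfold jtp_prod. simpl. ring.
  - set (x := ee w). set (g m := (jtp_coef N m * ee (IZR m * w))%C).
    set (n := Z.of_nat N). set (lo := (- Z.of_nat K)%Z). set (len := (2 * K + 1)%nat).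
    assert (Hx : x <> 0) by apply ee_neq0.
    assert (Hpow : forall m d, ee (IZR (m + d) * w) = (ee (IZR d * w) * ee (IZR m * w))%C).
    { intros m d. rewrite <- ee_plus. f_equal. rewrite plus_IZR. C_by_parts. }
    assert (Hm1 : forall m, ee (IZR (m - 1) * w) = (/ x * ee (IZR m * w))%C).
    { intro m. rewrite <- Z.add_opp_r, Hpow. replace (IZR (- (1)) * w)%C with (- w)%C by C_by_parts.
      rewrite ee_opp. reflexivity. }
    assert (Hp1 : forall m, ee (IZR (m + 1) * w) = (x * ee (IZR m * w))%C).
    { intro m. rewrite Hpow. replace (IZR 1 * w)%C with w by C_by_parts. reflexivity. }
    rewrite (Zsum_ext _ _ _ (fun m => (1 + qpow (2 * n + 1)) * g m + (- (qpow n * x)) * g (m - 1)%Z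
                                      + (- (qpow (n + 1) / x)) * g (m + 1)%Z)%C).
    2:{ intro m. unfold g. rewrite jtp_coef_S, Hm1, Hp1. fold n. field. exact Hx. }
    rewrite !Zsum_plus, !Zsum_scal.
    rewrite Zsum_pred_shift, Zsum_succ_shift
      by (unfold g, lo, len; rewrite jtp_coef_out by lia; ring).
    unfold g, lo, len. rewrite <- (IH K) by lia. rewrite jtp_prod_S, ee_opp. fold x n.
    replace (qpow (2 * n + 1)) with (qpow (n + 1) * qpow n)%C by (rewrite <- qpow_plus; f_equal; lia).
    field. exact Hx.
Qed.

Definition qpoch_lb : R := prod_lower_bound 1 qabs.
Definition qpoch_ub : R := exp (1 * (qabs / (1 - qabs))).

Lemma qabs_range : 0 <= qabs < 1.
Proof. pose proof qabs_pos. pose proof qabs_lt_1. lra. Qed.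

Lemma Cmod_qpoch_ge k : qpoch_lb <= Cmod (qpoch k).
Proof.
  pose proof qabs_range. apply Cmod_prod_one_minus_ge; try lra.
  intro i. rewrite Cmod_qpow_nat. lra.
Qed.

Lemma Cmod_qpoch_le k : Cmod (qpoch k) <= qpoch_ub.
Proof.
  pose proof qabs_range. apply Cmod_prod_one_minus_le; try lra.
  intro i. rewrite Cmod_qpow_nat. lra.
Qed.

Lemma Cmod_qpoch_inv_le j : Cmod (qpoch_inv j) <= / qpoch_lb.
Proof.
  assert (Hlb : 0 < qpoch_lb) by apply exp_pos.
  unfold qpoch_inv. destruct (j <? 0)%Z.
  - rewrite Cmod_0. left; apply Rinv_0_lt_compat; auto.
  - rewrite Cmod_inv by apply qpoch_neq0. apply Rinv_le_contravar; auto. apply Cmod_qpoch_ge.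
Qed.

Lemma Cmod_jtp_prod_ge w rho N : Cmod (ee w) = rho -> qabs < rho -> rho * qabs < 1 ->
  Cmod (1 - ee w) * prod_lower_bound rho qabs * prod_lower_bound (/ rho) qabs
  <= Cmod (jtp_prod (S N) w).
Proof.
  intros Hw Hl Hu. pose proof qabs_range.
  assert (Hrho : 0 < rho) by lra.
  assert (Hinv : / rho * qabs < 1).
  { apply Rmult_lt_reg_l with rho; [lra|]. rewrite <- Rmult_assoc, Rinv_r; lra. }
  assert (Hw' : Cmod (ee (- w)) = / rho) by (rewrite ee_opp, Cmod_inv, Hw by apply ee_neq0; reflexivity).
  unfold jtp_prod. rewrite prod_one_minus_S_first. change (Z.of_nat 0) with 0%Z.
  rewrite qpow_0, Cmult_1_r, !Cmod_mult.
  pose proof (Cmod_ge_0 (1 - ee w)).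
  assert (H1 : prod_lower_bound rho qabs
               <= Cmod (prod_one_minus (fun k => ee w * qpow (Z.of_nat (S k)))%C N)).
  { apply Cmod_prod_one_minus_ge; try lra. intro k. rewrite Cmod_mult, Cmod_qpow_nat, Hw. lra. }
  assert (H2 : prod_lower_bound (/ rho) qabs
               <= Cmod (prod_one_minus (fun k => ee (- w) * qpow (Z.of_nat (S k)))%C (S N))).
  { apply Cmod_prod_one_minus_ge; try lra; [left; apply Rinv_0_lt_compat; lra|].
    intro k. rewrite Cmod_mult, Cmod_qpow_nat, Hw'. lra. }
  pose proof (exp_pos (- (rho / (1 - rho * qabs) * (qabs / (1 - qabs))))).
  pose proof (exp_pos (- (/ rho / (1 - / rho * qabs) * (qabs / (1 - qabs))))).
  unfold prod_lower_bound in *.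
  apply Rmult_le_compat; try apply Rmult_le_pos; try lra. apply Rmult_le_compat_l; lra.
Qed.

Lemma qpow_shift_lim c : Clim eventually (fun N => qpow (Z.of_nat N + c)) 0.
Proof.
  intros e He. set (K := Cmod (qpow c)).
  assert (HK : 0 < K) by (apply Cmod_gt_0, qpow_neq0).
  destruct (pow_lt_1_zero qabs ltac:(pose proof qabs_range; rewrite Rabs_pos_eq; lra)
              (e / K) ltac:(apply Rdiv_lt_0_compat; auto)) as [N0 HN0].
  exists N0. intros N HN. replace (qpow (Z.of_nat N + c) - 0)%C with (qpow (Z.of_nat N + c)) by ring.
  rewrite qpow_plus, Cmod_mult, Cmod_qpow_nat. fold K.
  specialize (HN0 N HN). rewrite Rabs_pos_eq in HN0 by (apply pow_le; apply qabs_range).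
  apply Rmult_lt_compat_r with (r := K) in HN0; auto.
  replace (e / K * K) with e in HN0 by (field; lra). exact HN0.
Qed.

Lemma qpoch_mul_inv_plus_lim j :
  Clim eventually (fun N => qpoch N * qpoch_inv (Z.of_nat N + Z.of_nat j))%C 1.
Proof.
  induction j as [|j IH].
  - apply (Clim_ext (fun _ => RtoC 1)); [|apply Clim_const].
    intro N. rewrite Z.add_0_r, qpoch_inv_nat. field. apply qpoch_neq0.
  - apply (Clim_ext (fun N => qpoch N * qpoch_inv (Z.of_nat N + Z.of_nat j)
                              / (1 - qpow (Z.of_nat N + Z.of_nat (S j))))%C).
    + intro N. rewrite (qpoch_inv_rec (Z.of_nat N + Z.of_nat j)).
      replace (Z.of_nat N + Z.of_nat j + 1)%Z with (Z.of_nat N + Z.of_nat (S j))%Z by lia.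
      field. apply one_minus_qpow_neq0. lia.
    + apply (Clim_eq_limit _ (1 / (1 - 0))%C); [field; apply C1_nz|].
      apply Clim_div; [replace (1 - 0)%C with (RtoC 1) by ring; apply C1_nz | exact IH |].
      apply Clim_minus; [apply Clim_const | apply qpow_shift_lim].
Qed.

Lemma qpoch_mul_inv_minus_lim j :
  Clim eventually (fun N => qpoch N * qpoch_inv (Z.of_nat N - Z.of_nat j))%C 1.
Proof.
  induction j as [|j IH].
  - apply (Clim_ext (fun _ => RtoC 1)); [|apply Clim_const].
    intro N. rewrite Z.sub_0_r, qpoch_inv_nat. field. apply qpoch_neq0.
  - apply (Clim_ext (fun N => (1 - qpow (Z.of_nat N + - Z.of_nat j))
                              * (qpoch N * qpoch_inv (Z.of_nat N - Z.of_nat j)))%C).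
    + intro N. rewrite (qpoch_inv_rec (Z.of_nat N - Z.of_nat (S j))).
      replace (Z.of_nat N - Z.of_nat (S j) + 1)%Z with (Z.of_nat N - Z.of_nat j)%Z by lia.
      replace (Z.of_nat N + - Z.of_nat j)%Z with (Z.of_nat N - Z.of_nat j)%Z by lia. ring.
    + apply (Clim_eq_limit _ ((1 - 0) * 1)%C); [ring|].
      apply Clim_mult; [|exact IH]. apply Clim_minus; [apply Clim_const | apply qpow_shift_lim].
Qed.

Lemma qpoch_mul_inv_lim m : Clim eventually (fun N => qpoch N * qpoch_inv (Z.of_nat N + m))%C 1.
Proof.
  destruct (Z_le_gt_dec 0 m).
  - replace m with (Z.of_nat (Z.to_nat m)) by lia. apply qpoch_mul_inv_plus_lim.
  - apply (Clim_ext (fun N => qpoch N * qpoch_inv (Z.of_nat N - Z.of_nat (Z.to_nat (- m))))%C);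
      [intro N; f_equal; f_equal; lia | apply qpoch_mul_inv_minus_lim].
Qed.

(** The weights turning the finite triple product into a truncation of the theta series. *)
Definition jtp_weight (N : nat) (m : Z) : C :=
  (qpoch N * qpoch N * qpoch_inv (Z.of_nat N + m) * qpoch_inv (Z.of_nat N - m))%C.

Lemma jtp_weight_lim m : Clim eventually (fun N => jtp_weight N m) 1.
Proof.
  apply (Clim_ext (fun N => (qpoch N * qpoch_inv (Z.of_nat N + m))
                            * (qpoch N * qpoch_inv (Z.of_nat N + - m)))%C).
  - intro N. unfold jtp_weight. rewrite Z.add_opp_r. ring.
  - apply (Clim_eq_limit _ (1 * 1)%C); [ring|]. apply Clim_mult; apply qpoch_mul_inv_lim.
Qed.

Definition jtp_weight_bound : R := qpoch_ub * qpoch_ub * / qpoch_lb * / qpoch_lb.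

Lemma Cmod_jtp_weight_le N m : Cmod (jtp_weight N m) <= jtp_weight_bound.
Proof.
  unfold jtp_weight, jtp_weight_bound. rewrite !Cmod_mult.
  pose proof (Cmod_qpoch_le N). pose proof (Cmod_qpoch_inv_le (Z.of_nat N + m)).
  pose proof (Cmod_qpoch_inv_le (Z.of_nat N - m)). pose proof (Cmod_ge_0 (qpoch N)).
  pose proof (Cmod_ge_0 (qpoch_inv (Z.of_nat N + m))). pose proof (Cmod_ge_0 (qpoch_inv (Z.of_nat N - m))).
  repeat apply Rmult_le_compat; repeat apply Rmult_le_pos; auto.
Qed.

Definition jtp_theta_sum (w : C) (N : nat) : C :=
  (Cseries (fun p => jtp_weight N (Z.of_nat p) * theta_term eta w (Z.of_nat p))
   + Cseries (fun p => jtp_weight N (- Z.of_nat (S p)) * theta_term eta w (- Z.of_nat (S p))))%C.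

Lemma jtp_prod_eq_theta_sum w N :
  (qpoch N * qpoch N * jtp_prod N w)%C = (qpoch (2 * N) * jtp_theta_sum w N)%C.
Proof.
  rewrite (jtp_prod_eq_Zsum w N N (le_n N)), <- Zsum_scal.
  rewrite (Zsum_ext _ _ _ (fun m => qpoch (2 * N) * (jtp_weight N m * theta_term eta w m))%C).
  2:{ intro m. unfold jtp_coef, jtp_weight, theta_term, qtri. rewrite ee_plus. ring. }
  rewrite Zsum_scal, Zsum_symmetric_split. unfold jtp_theta_sum. f_equal.
  rewrite (Cseries_finite (S N)), (Cseries_finite N); auto.
  - intros p Hp. unfold jtp_weight. rewrite (qpoch_inv_neg (Z.of_nat N + - Z.of_nat (S p))) by lia. ring.
  - intros p Hp. unfold jtp_weight. rewrite (qpoch_inv_neg (Z.of_nat N - Z.of_nat p)) by lia. ring.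
Qed.

Lemma jtp_weighted_series_lim (f : nat -> C) (g : nat -> R) (idx : nat -> Z) :
  ex_series g -> (forall p, Cmod (f p) <= g p) ->
  Clim eventually (fun N => Cseries (fun p => jtp_weight N (idx p) * f p)%C) (Cseries f).
Proof.
  intros Hg Hf.
  assert (HB : 0 <= jtp_weight_bound)
    by (eapply Rle_trans; [apply Cmod_ge_0 | apply (Cmod_jtp_weight_le 0 0)]).
  apply (Clim_Cseries_dominated _ _ (fun p => (jtp_weight_bound + 1) * g p)).
  - apply (ex_series_scal_l (jtp_weight_bound + 1) g); auto.
  - intro p. apply (Clim_eq_limit _ (1 * f p)%C); [ring|].
    apply Clim_mult; [apply jtp_weight_lim | apply Clim_const].
  - intro p. pose proof (Hf p). pose proof (Cmod_ge_0 (f p)). nra.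
  - apply filter_forall. intros N p. rewrite Cmod_mult.
    pose proof (Cmod_jtp_weight_le N (idx p)). pose proof (Hf p). pose proof (Cmod_ge_0 (f p)).
    apply Rle_trans with (jtp_weight_bound * g p); [apply Rmult_le_compat; auto using Cmod_ge_0 | nra].
Qed.

Lemma jtp_theta_sum_lim w : Clim eventually (jtp_theta_sum w) (theta eta w).
Proof.
  pose proof PI_RGT_0. apply Clim_plus.
  - apply (jtp_weighted_series_lim _
             (gauss_bound (2 * PI * Rabs (Im w) + PI * Im eta) (PI * Im eta)) Z.of_nat).
    + apply ex_series_gauss_bound. nra.
    + intro p. apply Cmod_theta_term_nonneg_le, Rle_refl.
  - apply (jtp_weighted_series_lim _
             (fun p => exp (2 * PI * Rabs (Im w)) * gauss_bound (2 * PI * Rabs (Im w)) (PI * Im eta) p)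
             (fun p => - Z.of_nat (S p))%Z).
    + apply ex_series_scal_gauss_bound. nra.
    + intro p. apply Cmod_theta_term_neg_le; [apply Rle_refl | auto].
Qed.

Theorem Cmod_theta_ge rho : qabs < rho -> rho * qabs < 1 ->
  exists kappa, 0 < kappa /\
    forall w, Cmod (ee w) = rho -> kappa * Cmod (1 - ee w) <= Cmod (theta eta w).
Proof.
  intros Hl Hu.
  set (D := prod_lower_bound rho qabs * prod_lower_bound (/ rho) qabs).
  assert (HD : 0 < D) by (apply Rmult_lt_0_compat; apply exp_pos).
  assert (Hlb : 0 < qpoch_lb) by apply exp_pos. assert (Hub : 0 < qpoch_ub) by apply exp_pos.
  exists (D * qpoch_lb * qpoch_lb / qpoch_ub). split.
  { apply Rdiv_lt_0_compat; [apply Rmult_lt_0_compat; [apply Rmult_lt_0_compat|]|]; assumption. }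
  (* [|jtp_theta_sum w N| = |(q;q)_N|^2 |jtp_prod N w| / |(q;q)_2N|] is bounded below uniformly in [N]. *)
  intros w Hw. apply (Cmod_ge_of_Clim_eventually (jtp_theta_sum w)); [apply jtp_theta_sum_lim|].
  exists 1%nat. intros [|N] HN; [lia|].
  pose proof (jtp_prod_eq_theta_sum w (S N)) as E. apply (f_equal Cmod) in E. rewrite !Cmod_mult in E.
  pose proof (Cmod_jtp_prod_ge w rho N Hw Hl Hu) as HP. rewrite Rmult_assoc in HP. fold D in HP.
  pose proof (Cmod_qpoch_ge (S N)). pose proof (Cmod_qpoch_le (2 * S N)).
  assert (HQ2 : 0 < Cmod (qpoch (2 * S N))) by apply Cmod_gt_0, qpoch_neq0.
  pose proof (Cmod_ge_0 (1 - ee w)). pose proof (Cmod_ge_0 (jtp_theta_sum w (S N))).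
  set (a := Cmod (1 - ee w)) in *.
  apply Rmult_le_reg_r with qpoch_ub; auto.
  replace (D * qpoch_lb * qpoch_lb / qpoch_ub * a * qpoch_ub) with (qpoch_lb * qpoch_lb * (a * D))
    by (field; lra).
  apply Rle_trans with (Cmod (qpoch (S N)) * Cmod (qpoch (S N)) * Cmod (jtp_prod (S N) w)).
  - apply Rmult_le_compat; try apply Rmult_le_pos; try nra.
  - rewrite E. nra.
Qed.

Corollary theta_neq0 w : qabs < Cmod (ee w) <= 1 -> ee w <> 1 -> theta eta w <> 0.
Proof.
  intros Hx Hne E.
  destruct (Cmod_theta_ge (Cmod (ee w))) as [k [Hk H]]; [lra | pose proof qabs_range; nra |].
  specialize (H w eq_refl). rewrite E, Cmod_0 in H.
  assert (0 < Cmod (1 - ee w)) by (apply Cmod_gt_0; intro E2; apply Hne; apply Ceq_minus in E2; auto).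
  nra.
Qed.

Corollary theta_quot_at_0_neq0 : theta_quot eta 0 <> 0.
Proof.
  destruct (Cmod_theta_ge 1) as [k [Hk H]]; [apply qabs_lt_1 | rewrite Rmult_1_l; apply qabs_lt_1 |].
  (* on the real line [|theta_quot t| >= k] wherever [e(t) <> 1]; let [t -> 0] *)
  intro E. enough (k <= Cmod (theta_quot eta 0)) by (rewrite E, Cmod_0 in H0; lra).
  apply Cmod_ge_of_Ccontinuous; [apply theta_quot_continuous; auto|].
  intros d Hd. set (t := Rmin (d / 2) (1 / 8)).
  assert (Ht : 0 < t) by (apply Rmin_pos; lra).
  assert (Ht1 : t <= d / 2) by apply Rmin_l. assert (Ht2 : t <= 1 / 8) by apply Rmin_r.
  exists (RtoC t). split; [replace (RtoC t - 0)%C with (RtoC t) by ring; rewrite Cmod_R, Rabs_pos_eq; lra|].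
  assert (Hee : ee t <> 1) by (apply ee_neq1_real; simpl; lra).
  assert (Hm : Cmod (ee t) = 1) by (rewrite Cmod_ee; simpl; rewrite Rmult_0_r, Ropp_0; apply exp_0).
  specialize (H t Hm). rewrite theta_eq_mul_quot, Cmod_mult in H by auto.
  replace (ee t - 1)%C with (- (1 - ee t))%C in H by ring. rewrite Cmod_opp in H.
  assert (0 < Cmod (1 - ee t)) by (apply Cmod_gt_0; intro E2; apply Hee; apply Ceq_minus in E2; auto).
  nra.
Qed.

End QSeries.

Lemma In_Zrange n x : In x (Zrange n) <-> (0 <= x < n)%Z.
Proof.
  unfold Zrange. rewrite in_map_iff. split.
  - intros [y [<- Hy]]. apply in_seq in Hy. lia.
  - intro Hx. exists (Z.to_nat x). rewrite in_seq. split; lia.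
Qed.

Lemma In_Zrange_succ n x : In x (map Z.succ (Zrange (n - 1))) <-> (1 <= x < n)%Z.
Proof.
  rewrite in_map_iff. split.
  - intros [y [<- Hy]]. apply In_Zrange in Hy. lia.
  - intro Hx. exists (x - 1)%Z. rewrite In_Zrange. split; lia.
Qed.

Lemma Zrange_cons n : (1 <= n)%Z -> Zrange n = 0%Z :: map Z.succ (Zrange (n - 1)).
Proof.
  intro Hn. unfold Zrange. rewrite map_map.
  replace (Z.to_nat n) with (S (Z.to_nat (n - 1))) by lia. simpl. f_equal.
  rewrite <- seq_shift, map_map. apply map_ext. intro; lia.
Qed.

Lemma eqmod_iff n x y : (0 < n)%Z -> eqmod n x y = true <-> exists t, (x - y = n * t)%Z.
Proof.
  intro Hn. unfold eqmod. rewrite Z.eqb_eq. split.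
  - intro H. exists ((x - y) / n)%Z. apply Z.div_exact; [lia|].
    rewrite Zminus_mod, H, Z.sub_diag. apply Z.mod_0_l. lia.
  - intros [t Ht]. replace x with (y + t * n)%Z by lia. apply Z.mod_add. lia.
Qed.

Lemma mod_neq0_mul_coprime n k r :
  (0 < n)%Z -> Z.gcd n k = 1%Z -> (0 < r < n)%Z -> ((k * r) mod n <> 0)%Z.
Proof.
  intros Hn Hg Hr E. apply Z.mod_divide in E; [|lia].
  apply Z.gauss in E; [|exact Hg]. destruct E as [c Hc].
  destruct (Z_lt_le_dec c 1); [assert (c * n <= 0)%Z by nia | assert (n <= c * n)%Z by nia]; lia.
Qed.

Lemma eqmod_iff_mod_sub n x y : (0 < n)%Z -> eqmod n x y = true <-> ((y - x) mod n = 0)%Z.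
Proof.
  intro Hn. rewrite eqmod_iff by exact Hn. split.
  - intros [t Ht]. replace (y - x)%Z with ((- t) * n)%Z by lia. apply Z.mod_mul. lia.
  - intro H. apply Zmod_divides in H; [|lia]. destruct H as [t Ht]. exists (- t)%Z. lia.
Qed.

Lemma mod_sub_mod_r n x y : (0 < n)%Z -> ((x - (x - y) mod n) mod n = y mod n)%Z.
Proof.
  intro Hn. rewrite Zminus_mod, Z.mod_mod, <- Zminus_mod by lia. f_equal. lia.
Qed.

Lemma mod_add_mod_r n x y : (0 < n)%Z -> ((x + (y - x) mod n) mod n = y mod n)%Z.
Proof.
  intro Hn. rewrite Zplus_mod, Z.mod_mod, <- Zplus_mod by lia. f_equal. lia.
Qed.

Lemma Cprod_cons x (l : list Z) (f : Z -> C) : Cprod (x :: l) f = (f x * Cprod l f)%C.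
Proof. reflexivity. Qed.

Lemma Cprod_neq0 (l : list Z) (f : Z -> C) : (forall x, In x l -> f x <> 0) -> Cprod l f <> 0.
Proof. induction l; simpl; intro H; [apply C1_nz | apply Cmult_neq_0; auto]. Qed.

Lemma Cprod_ext_in (l : list Z) (f g : Z -> C) : (forall x, In x l -> f x = g x) -> Cprod l f = Cprod l g.
Proof. induction l; simpl; intro H; auto. rewrite H, IHl; auto. Qed.

Lemma Csum_ext (l : list Z) (f g : Z -> C) : (forall x, f x = g x) -> Csum l f = Csum l g.
Proof. intro H. induction l; simpl; auto. rewrite H, IHl. reflexivity. Qed.

Lemma Csum_plus (l : list Z) (f g : Z -> C) : Csum l (fun x => f x + g x)%C = (Csum l f + Csum l g)%C.
Proof. induction l; simpl; [ring | rewrite IHl; ring]. Qed.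

Lemma Csum_zero (l : list Z) (G : Z -> C) : (forall r, In r l -> G r = 0) -> Csum l G = 0.
Proof. induction l; simpl; intro H; auto. rewrite H, IHl by auto. ring. Qed.

Lemma Csum_seq_single lo len (G : Z -> C) c :
  (Z.of_nat lo <= c < Z.of_nat lo + Z.of_nat len)%Z ->
  (forall r, (Z.of_nat lo <= r < Z.of_nat lo + Z.of_nat len)%Z -> r <> c -> G r = 0) ->
  Csum (map Z.of_nat (seq lo len)) G = G c.
Proof.
  revert lo. induction len as [|len IH]; intros lo Hc H; [lia|]. simpl.
  destruct (Z.eq_dec (Z.of_nat lo) c) as [<-|E].
  - rewrite Csum_zero; [ring|]. intros r Hr. apply in_map_iff in Hr.
    destruct Hr as [x [<- Hx]]. apply in_seq in Hx. apply H; lia.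
  - rewrite H, IH by (lia || (intros; apply H; lia)). ring.
Qed.

Lemma Csum_Zrange_single n (G : Z -> C) c : (0 <= c < n)%Z ->
  (forall r, (0 <= r < n)%Z -> r <> c -> G r = 0) -> Csum (Zrange n) G = G c.
Proof. intros Hc H. apply Csum_seq_single; [lia | intros; apply H; lia]. Qed.

Lemma filter_all_true {A} (f : A -> bool) (l : list A) :
  (forall x, In x l -> f x = true) -> filter f l = l.
Proof. induction l as [|x l IH]; simpl; intro H; auto. rewrite H, IH; auto. Qed.

Lemma Cprod_remove (l : list Z) (P : Z -> bool) (f : Z -> C) c :
  NoDup l -> In c l -> (forall x, In x l -> P x = true <-> x = c) ->
  Cprod l f = (f c * Cprod (filter (fun x => negb (P x)) l) f)%C.
Proof.
  induction l as [|x l IH]; intros Hnd Hc HP; [contradiction|].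
  inversion Hnd as [|? ? Hx Hl]; subst. simpl.
  destruct (Z.eq_dec x c) as [<-|Hxc].
  - rewrite (proj2 (HP x (or_introl eq_refl)) eq_refl). simpl.
    rewrite filter_all_true; [reflexivity|]. intros y Hy.
    destruct (P y) eqn:E; [|reflexivity]. exfalso. apply Hx.
    rewrite (proj1 (HP y (or_intror Hy)) E) in Hy. exact Hy.
  - destruct Hc as [E|Hc]; [contradiction|].
    destruct (P x) eqn:E; [apply HP in E; [contradiction | left; reflexivity]|]. simpl.
    rewrite IH; auto; [ring|]. intros y Hy. apply HP. right. exact Hy.
Qed.

Lemma NoDup_Zrange n : NoDup (Zrange n).
Proof.
  apply NoDup_map_NoDup_ForallPairs; [|apply seq_NoDup].
  intros x y _ _. apply Nat2Z.inj.
Qed.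

Section Residues.
Variable n : Z.
Hypothesis Hn : (1 <= n)%Z.

Lemma filter_not_eqmod_Zrange_0 s : (s mod n = 0)%Z ->
  filter (fun b => negb (eqmod n b s)) (Zrange n) = map Z.succ (Zrange (n - 1)).
Proof.
  intro Hs. rewrite Zrange_cons by exact Hn. simpl.
  unfold eqmod at 1. rewrite Hs, Z.mod_0_l, Z.eqb_refl by lia. simpl.
  apply filter_all_true. intros x Hx. apply In_Zrange_succ in Hx.
  unfold eqmod. rewrite Hs, Z.mod_small by lia. destruct (Z.eqb_spec x 0); [lia | reflexivity].
Qed.

Lemma filter_not_eqmod_Zrange s : (s mod n <> 0)%Z ->
  filter (fun b => negb (eqmod n b s)) (Zrange n) =
  0%Z :: filter (fun b => negb (eqmod n b s)) (map Z.succ (Zrange (n - 1))).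
Proof.
  intro Hs. rewrite Zrange_cons by exact Hn. simpl.
  unfold eqmod at 1. rewrite Z.mod_0_l by lia. apply Z.eqb_neq in Hs. rewrite Z.eqb_sym, Hs.
  reflexivity.
Qed.

Lemma Cprod_Zrange_succ_remove (f : Z -> C) s : (s mod n <> 0)%Z ->
  Cprod (map Z.succ (Zrange (n - 1))) f =
  (f (s mod n)%Z * Cprod (filter (fun b => negb (eqmod n b s)) (map Z.succ (Zrange (n - 1)))) f)%C.
Proof.
  intro Hs. pose proof (Z.mod_pos_bound s n ltac:(lia)).
  apply Cprod_remove.
  - pose proof (NoDup_Zrange n) as H'. rewrite Zrange_cons in H' by exact Hn.
    inversion H'; assumption.
  - apply In_Zrange_succ. lia.
  - intros x Hx. apply In_Zrange_succ in Hx. unfold eqmod. rewrite Z.eqb_eq, (Z.mod_small x) by lia.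
    reflexivity.
Qed.

End Residues.

Definition punctured0 (P : C -> Prop) :=
  exists d, 0 < d /\ forall t, Cmod t < d -> t <> 0 -> P t.

#[global] Instance punctured0_filter : Filter punctured0.
Proof.
  constructor.
  - exists 1; split; [lra | auto].
  - intros P Q [d1 [H1 P1]] [d2 [H2 P2]]. exists (Rmin d1 d2); split; [apply Rmin_pos; auto|].
    intros z Hz Hn. pose proof (Rmin_l d1 d2); pose proof (Rmin_r d1 d2).
    split; [apply P1 | apply P2]; auto; lra.
  - intros P Q HPQ [d [Hd HP]]. exists d; split; auto.
Qed.

Lemma Clim_punctured0_continuous (f : C -> C) : Ccontinuous f 0 -> Clim punctured0 f (f 0).
Proof.
  intros Hf e He. destruct (Hf e He) as [d [Hd H]]. exists d. split; auto.
  intros t Ht _. apply H. replace (t - 0)%C with t by ring. exact Ht.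
Qed.

Lemma Clim_punctured0_comp_scal (f : C -> C) (a : C) :
  Ccontinuous f 0 -> Clim punctured0 (fun t => f (a * t)%C) (f 0).
Proof.
  intro Hf. replace (f 0) with (f (a * 0)%C) by (f_equal; ring).
  apply (Clim_punctured0_continuous (fun t => f (a * t)%C)).
  apply (Ccontinuous_comp f (fun t => a * t)%C); [apply Ccontinuous_scal|].
  replace (a * 0)%C with (RtoC 0) by ring. exact Hf.
Qed.

Lemma ee_neq1_punctured0 : punctured0 (fun t => ee t <> 1).
Proof. exists (1 / 4). split; [lra|]. intros t Ht Hn. apply ee_neq1_small; auto. Qed.

(** The quotient [(e(a t) - 1) / (e(t) - 1)] is a geometric sum, hence tends to [a]. *)
Lemma ee_ratio_lim (a : Z) : Clim punctured0 (fun t => (ee (IZR a * t) - 1) / (ee t - 1))%C (IZR a).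
Proof.
  assert (Hnz : forall t, ee t <> 1 -> (ee t - 1)%C <> 0) by (intros t H E; apply H, Ceq_minus, E).
  destruct (Z_le_gt_dec 0 a) as [Ha|Ha].
  - replace a with (Z.of_nat (Z.to_nat a)) by lia. rewrite <- INR_IZR_INZ.
    apply (Clim_ext_loc (ee_geom (Z.to_nat a))).
    + generalize ee_neq1_punctured0. apply filter_imp. intros t Ht.
      rewrite <- ee_geom_mul. field. auto.
    + rewrite <- ee_geom_at_0. apply Clim_punctured0_continuous, ee_geom_continuous.
  - set (k := Z.to_nat (- a)). replace a with (- Z.of_nat k)%Z by lia. rewrite opp_IZR, <- INR_IZR_INZ.
    apply (Clim_ext_loc (fun t => - (ee (- INR k * t) * ee_geom k t))%C).
    + generalize ee_neq1_punctured0. apply filter_imp. intros t Ht.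
      replace (- INR k * t)%C with (- (INR k * t))%C by ring.
      replace (RtoC (- INR k) * t)%C with (- (INR k * t))%C by C_by_parts.
      assert (HX : ee (INR k * t) <> 0) by apply ee_neq0. rewrite ee_opp.
      replace (/ ee (INR k * t) - 1)%C with (- ((ee (INR k * t) - 1) / ee (INR k * t)))%C
        by (field; exact HX).
      rewrite <- ee_geom_mul. field. split; auto.
    + apply (Clim_eq_limit _ (- (ee (- INR k * 0) * ee_geom k 0))%C).
      { rewrite ee_geom_at_0, Cmult_0_r, ee_0. C_by_parts. }
      apply Clim_opp, Clim_mult.
      * apply (Clim_punctured0_continuous (fun t => ee (- INR k * t))%C).
        apply (Ccontinuous_comp ee); [apply Ccontinuous_scal | apply ee_continuous].
      * apply Clim_punctured0_continuous, ee_geom_continuous.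
Qed.

Lemma filterlim_of_Clim_punctured0 (Q : C -> Prop) (f : C -> C) (L : C) :
  (forall t, Q t -> t <> 0) -> Clim punctured0 f L ->
  filterlim f (within Q (locally (RtoC 0))) (locally L).
Proof.
  intros HQ Hl P [eps HP].
  destruct (Hl eps (cond_pos eps)) as [d [Hd Hfd]].
  exists (mkposreal (d / 2) ltac:(lra)). intros y [Hy1 Hy2] HQy. apply HP.
  change (Rabs (fst y - 0) < d / 2) in Hy1. change (Rabs (snd y - 0) < d / 2) in Hy2.
  rewrite Rminus_0_r in Hy1, Hy2.
  assert (Hm : Cmod y < d) by (eapply Rle_lt_trans; [apply Cmod_le_Rabs_Re_Im | unfold Re, Im; lra]).
  specialize (Hfd y Hm (HQ y HQy)).
  pose proof (re_le_Cmod (f y - L)). pose proof (Rabs_Im_le_Cmod (f y - L)).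
  split; [change (Rabs (fst (f y) - fst L) < eps) | change (Rabs (snd (f y) - snd L) < eps)].
  - replace (fst (f y) - fst L) with (Re (f y - L)) by (unfold Re; simpl; ring). lra.
  - replace (snd (f y) - snd L) with (Im (f y - L)) by (unfold Im; simpl; ring). lra.
Qed.

(** * Theta functions of level n *)

Section ThetaLevel.
Variable n : Z.
Hypothesis Hn : (1 <= n)%Z.
Variable eta : C.
Hypothesis Heta : 0 < Im eta.

Notation T := (thetaZn n eta).

Lemma theta_alpha_continuous al z0 : Ccontinuous (theta_alpha n eta al) z0.
Proof.
  unfold theta_alpha. apply Ccontinuous_mult.
  - apply (Ccontinuous_comp ee (fun z => IZR al * z + (IZR al / (2 * IZR n))%R
                                         + (IZR (al * (al - n)) / (2 * IZR n))%R * eta)%C);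
      [|apply ee_continuous].
    apply Ccontinuous_plus; [apply Ccontinuous_plus; [apply Ccontinuous_scal | apply Ccontinuous_const]
                            | apply Ccontinuous_const].
  - apply Clim_Cprod. intros b _.
    apply (Ccontinuous_comp (theta eta) (fun z => z + (IZR b / IZR n)%R + (IZR al / IZR n)%R * eta)%C);
      [|apply theta_continuous; auto].
    apply Ccontinuous_plus; [apply Ccontinuous_affine | apply Ccontinuous_const].
Qed.

Lemma thetaZn_continuous b z0 : Ccontinuous (T b) z0.
Proof. apply theta_alpha_continuous. Qed.

Lemma thetaZn_mod b b' : (b mod n = b' mod n)%Z -> T b = T b'.
Proof. intro H. unfold thetaZn. rewrite H. reflexivity. Qed.

Lemma IZR_div_range a : (1 <= a < n)%Z -> 0 < IZR a / IZR n < 1.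
Proof.
  intro Ha. assert (1 <= IZR a) by (apply IZR_le; lia). assert (IZR a < IZR n) by (apply IZR_lt; lia).
  split; [apply Rdiv_lt_0_compat; lra|]. apply Rmult_lt_reg_r with (IZR n); [lra|]. field_simplify; lra.
Qed.

Lemma thetaZn_at_0_neq0 b : (b mod n <> 0)%Z -> T b 0 <> 0.
Proof.
  intro Hb. unfold thetaZn, theta_alpha. set (al := (b mod n)%Z).
  assert (Hal : (1 <= al < n)%Z) by (pose proof (Z.mod_pos_bound b n ltac:(lia)); unfold al; lia).
  pose proof (IZR_div_range al Hal) as Hq. pose proof PI_RGT_0.
  apply Cmult_neq_0; [apply ee_neq0|]. apply Cprod_neq0. intros m Hm.
  set (w := (0 + (IZR m / IZR n)%R + (IZR al / IZR n)%R * eta)%C).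
  assert (HI : Im w = IZR al / IZR n * Im eta) by (unfold w; destruct eta; simpl; ring).
  apply theta_neq0; auto.
  - rewrite Cmod_ee, HI. unfold qabs. split.
    + apply exp_increasing. assert (0 < PI * Im eta) by nra. nra.
    + rewrite <- exp_0. apply exp_le. assert (0 < PI * Im eta) by nra. nra.
  - apply ee_neq1_Im_pos. rewrite HI. apply Rmult_lt_0_compat; lra.
Qed.

(** [theta_0] contains the factor [theta], which has a simple zero at [0];
    the cofactor does not vanish there. *)
Definition theta0_cofactor (w : C) : C :=
  Cprod (map Z.succ (Zrange (n - 1))) (fun m => theta eta (w + (IZR m / IZR n)%R)).

Lemma thetaZn_0_eq w : T 0 w = ((ee w - 1) * (theta_quot eta w * theta0_cofactor w))%C.
Proof.
  unfold thetaZn. rewrite Z.mod_0_l by lia. unfold theta_alpha.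
  rewrite Zrange_cons by exact Hn. simpl Cprod. rewrite Z.mul_0_l.
  replace (IZR 0 * w + (IZR 0 / (2 * IZR n))%R + (IZR 0 / (2 * IZR n))%R * eta)%C
    with (RtoC 0) by C_by_parts.
  replace (w + (IZR 0 / IZR n)%R + (IZR 0 / IZR n)%R * eta)%C with w by C_by_parts.
  rewrite ee_0, theta_eq_mul_quot by exact Heta. unfold theta0_cofactor.
  rewrite (Cprod_ext_in _ _ (fun m => theta eta (w + (IZR m / IZR n)%R))).
  - ring.
  - intros m _. f_equal. C_by_parts.
Qed.

Lemma thetaZn_0_at_0 : T 0 0 = 0.
Proof. rewrite thetaZn_0_eq, ee_0. ring. Qed.

Lemma theta0_quot_continuous z0 : Ccontinuous (fun w => theta_quot eta w * theta0_cofactor w)%C z0.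
Proof.
  apply Ccontinuous_mult; [apply theta_quot_continuous; auto|].
  apply Clim_Cprod. intros b _.
  apply (Ccontinuous_comp (theta eta) (fun w => w + (IZR b / IZR n)%R)%C);
    [apply Ccontinuous_affine | apply theta_continuous; auto].
Qed.

Lemma theta0_quot_at_0_neq0 : (theta_quot eta 0 * theta0_cofactor 0)%C <> 0.
Proof.
  apply Cmult_neq_0; [apply theta_quot_at_0_neq0; auto|].
  apply Cprod_neq0. intros m Hm. apply In_Zrange_succ in Hm.
  pose proof (IZR_div_range m Hm) as Hq.
  apply theta_neq0; auto.
  - rewrite Cmod_ee. replace (Im (0 + (IZR m / IZR n)%R)) with 0 by (simpl; ring).
    rewrite Rmult_0_r, Ropp_0, exp_0. pose proof (qabs_lt_1 eta Heta). lra.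
  - apply ee_neq1_real; simpl; [ring | lra].
Qed.

Lemma thetaZn_0_ratio_lim (a : Z) : Clim punctured0 (fun t => T 0 (IZR a * t) / T 0 t)%C (IZR a).
Proof.
  set (V w := (theta_quot eta w * theta0_cofactor w)%C).
  assert (HV : Clim punctured0 V (V 0)) by apply Clim_punctured0_continuous, theta0_quot_continuous.
  assert (HV0 : V 0 <> 0) by apply theta0_quot_at_0_neq0.
  assert (Hnz : punctured0 (fun t => V t <> 0)).
  { destruct (HV (Cmod (V 0)) ltac:(apply Cmod_gt_0; exact HV0)) as [d [Hd Hc]].
    exists d. split; auto. intros t Ht Ht0 E. specialize (Hc t Ht Ht0). rewrite E in Hc.
    replace (0 - V 0)%C with (- V 0)%C in Hc by ring. rewrite Cmod_opp in Hc. lra. }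
  apply (Clim_ext_loc (fun t => ((ee (IZR a * t) - 1) / (ee t - 1)) * (V (IZR a * t)%C / V t))%C).
  - generalize (filter_and _ _ Hnz ee_neq1_punctured0). apply filter_imp. intros t [H1 H2].
    rewrite !thetaZn_0_eq. fold (V t) (V (IZR a * t)%C). field.
    split; auto. intro E. apply H2, Ceq_minus, E.
  - apply (Clim_eq_limit _ (IZR a * (V 0 / V 0))%C); [field; exact HV0|].
    apply Clim_mult; [apply ee_ratio_lim|].
    apply Clim_div; [exact HV0 | | exact HV].
    apply Clim_punctured0_comp_scal, theta0_quot_continuous.
Qed.

End ThetaLevel.

(** The coefficient of [x_(j-r) (x) x_(i+r)] in [sym_m (x_i (x) x_j)]. *)
Definition sym_coeff (n m i j r : Z) : C :=
  (Defs.ind (eqmod n r (j - i)) - IZR m * Defs.ind (r =? 0)%Z)%C.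

Lemma symmat_eq_Csum n m i j a b : (0 < n)%Z -> symmat n m i j a b =
  Csum (Zrange n) (fun r => sym_coeff n m i j r * Defs.ind (eqmod n a (j - r) && eqmod n b (i + r)))%C.
Proof.
  intro Hn. set (X r := Defs.ind (eqmod n a (j - r) && eqmod n b (i + r))).
  set (c := ((j - i) mod n)%Z). assert (Hc : (0 <= c < n)%Z) by (apply Z.mod_pos_bound; lia).
  transitivity (Csum (Zrange n) (fun r => Defs.ind (eqmod n r (j - i)) * X r)
                + Csum (Zrange n) (fun r => - IZR m * (Defs.ind (r =? 0)%Z * X r)))%C.
  2:{ rewrite <- Csum_plus. apply Csum_ext. intro r. unfold sym_coeff, X. ring. }
  assert (Hres : Csum (Zrange n) (fun r => Defs.ind (eqmod n r (j - i)) * X r)%C = X c).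
  { rewrite (Csum_Zrange_single n _ c Hc).
    - unfold eqmod, c. rewrite Z.mod_mod, Z.eqb_refl by lia. unfold Defs.ind. ring.
    - intros r Hr Hrc. unfold eqmod. fold c. rewrite Z.mod_small by lia.
      destruct (Z.eqb_spec r c); [lia|]. unfold Defs.ind. ring. }
  assert (Hzero : Csum (Zrange n) (fun r => - IZR m * (Defs.ind (r =? 0)%Z * X r))%C
                  = (- IZR m * X 0%Z)%C).
  { rewrite (Csum_Zrange_single n _ 0); [unfold Defs.ind; simpl; ring | lia |].
    intros r Hr Hr0. destruct (Z.eqb_spec r 0); [lia|]. unfold Defs.ind. ring. }
  rewrite Hres, Hzero. unfold symmat, X, c, eqmod.
  rewrite mod_sub_mod_r, mod_add_mod_r, Z.sub_0_r, Z.add_0_r by lia. ring.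
Qed.

Section RMatrix.
Variables n k : Z.
Variable eta : C.
Hypothesis Hk : (1 <= k < n)%Z.
Hypothesis Hg : Z.gcd n k = 1%Z.
Hypothesis Heta : 0 < Im eta.
Variable m : Z.

Notation T := (thetaZn n eta).

Let Hn : (1 <= n)%Z.
Proof. lia. Qed.

Definition Rcoeff_den : C := Cprod (map Z.succ (Zrange (n - 1))) (fun b => T b 0).

Lemma Rcoeff_den_neq0 : Rcoeff_den <> 0.
Proof.
  apply Cprod_neq0. intros x Hx. apply In_Zrange_succ in Hx.
  apply thetaZn_at_0_neq0; auto. rewrite Z.mod_small; lia.
Qed.

Lemma Rcoeff_scaled i j r t : Rcoeff n k eta t (IZR m * t) i j r =
  (Cprod (filter (fun b => negb (eqmod n b (j - i - r))) (Zrange n)) (fun b => T b (IZR (- m) * t))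
   / Rcoeff_den * (T (j - i + r * (k - 1)) (IZR (1 - m) * t) / T (k * r) t))%C.
Proof.
  unfold Rcoeff, Rcoeff_den.
  replace (- (IZR m * t))%C with (IZR (- m) * t)%C by (rewrite opp_IZR; C_by_parts).
  replace (IZR (- m) * t + t)%C with (IZR (1 - m) * t)%C by (rewrite opp_IZR, minus_IZR; C_by_parts).
  reflexivity.
Qed.

Lemma Clim_Cprod_thetaZn (l : list Z) (c : C) :
  Clim punctured0 (fun t => Cprod l (fun b => T b (c * t)%C)) (Cprod l (fun b => T b 0)).
Proof. apply Clim_Cprod. intros b _. apply Clim_punctured0_comp_scal, thetaZn_continuous; auto. Qed.

Lemma Rcoeff_lim_of_eqmod i j r : (0 <= r < n)%Z -> ((j - i - r) mod n = 0)%Z ->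
  Clim punctured0 (fun t => Rcoeff n k eta t (IZR m * t) i j r) (if (r =? 0)%Z then 1 - IZR m else 1)%C.
Proof.
  intros Hr Hs. apply (Clim_ext _ _ _ (fun t => eq_sym (Rcoeff_scaled i j r t))).
  rewrite filter_not_eqmod_Zrange_0 by auto.
  rewrite (thetaZn_mod n eta (j - i + r * (k - 1)) (k * r)).
  2:{ apply Zmod_divides in Hs; [|lia]. destruct Hs as [c Hc].
      replace (j - i + r * (k - 1))%Z with (k * r + c * n)%Z by lia. apply Z.mod_add. lia. }
  assert (Hfirst : Clim punctured0
            (fun t => Cprod (map Z.succ (Zrange (n - 1))) (fun b => T b (IZR (- m) * t)) / Rcoeff_den)%C 1).
  { apply (Clim_eq_limit _ (Rcoeff_den / Rcoeff_den)%C); [field; apply Rcoeff_den_neq0|].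
    apply Clim_div; [apply Rcoeff_den_neq0 | apply Clim_Cprod_thetaZn | apply Clim_const]. }
  destruct (Z.eqb_spec r 0) as [->|Hr0].
  - rewrite Z.mul_0_r. apply (Clim_eq_limit _ (1 * IZR (1 - m))%C); [rewrite minus_IZR; C_by_parts|].
    apply Clim_mult; [exact Hfirst | apply thetaZn_0_ratio_lim; auto].
  - assert (Hkr : ((k * r) mod n <> 0)%Z) by (apply mod_neq0_mul_coprime; lia).
    assert (HT : T (k * r) 0 <> 0) by (apply thetaZn_at_0_neq0; auto).
    apply (Clim_eq_limit _ (1 * (T (k * r) 0 / T (k * r) 0))%C); [field; exact HT|].
    apply Clim_mult; [exact Hfirst|]. apply Clim_div; [exact HT | |].
    + apply Clim_punctured0_comp_scal, thetaZn_continuous; auto.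
    + apply Clim_punctured0_continuous, thetaZn_continuous; auto.
Qed.

Lemma Rcoeff_lim_of_neqmod i j r : (0 <= r < n)%Z -> ((j - i - r) mod n <> 0)%Z ->
  Clim punctured0 (fun t => Rcoeff n k eta t (IZR m * t) i j r) (if (r =? 0)%Z then - IZR m else 0)%C.
Proof.
  intros Hr Hs. apply (Clim_ext _ _ _ (fun t => eq_sym (Rcoeff_scaled i j r t))).
  rewrite filter_not_eqmod_Zrange by auto.
  set (s := (j - i - r)%Z) in *.
  set (l := filter (fun b => negb (eqmod n b s)) (map Z.succ (Zrange (n - 1)))).
  destruct (Z.eqb_spec r 0) as [->|Hr0].
  - (* [theta_0] appears in the numerator and in the denominator *)
    replace (j - i + 0 * (k - 1))%Z with s by (unfold s; ring). rewrite Z.mul_0_r.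
    apply (Clim_ext (fun t => (T 0 (IZR (- m) * t) / T 0 t)
                              * (Cprod l (fun b => T b (IZR (- m) * t)) * T s (IZR (1 - m) * t)
                                 / Rcoeff_den))%C).
    { intro t. rewrite Cprod_cons. unfold Cdiv. ring. }
    assert (Hden : Rcoeff_den = (T s 0 * Cprod l (fun b => T b 0))%C).
    { unfold Rcoeff_den. rewrite (Cprod_Zrange_succ_remove n Hn _ s) by exact Hs.
      rewrite (thetaZn_mod n eta s (s mod n)) by (rewrite Z.mod_mod; lia). reflexivity. }
    apply (Clim_eq_limit _ (IZR (- m) * (Cprod l (fun b => T b 0) * T s 0 / Rcoeff_den))%C).
    { assert (Hs0 : T s 0 <> 0) by (apply thetaZn_at_0_neq0; auto).
      assert (Hl0 : Cprod l (fun b => T b 0) <> 0)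
        by (intro E; apply Rcoeff_den_neq0; rewrite Hden, E; ring).
      rewrite Hden, opp_IZR, RtoC_opp. field. auto. }
    apply Clim_mult; [apply thetaZn_0_ratio_lim; auto|].
    apply Clim_div; [apply Rcoeff_den_neq0 | | apply Clim_const].
    apply Clim_mult; [apply Clim_Cprod_thetaZn | apply Clim_punctured0_comp_scal, thetaZn_continuous; auto].
  - (* [theta_0] appears only in the numerator *)
    assert (Hkr : ((k * r) mod n <> 0)%Z) by (apply mod_neq0_mul_coprime; lia).
    assert (HT : T (k * r) 0 <> 0) by (apply thetaZn_at_0_neq0; auto).
    apply (Clim_eq_limit _ (Cprod (0%Z :: l) (fun b => T b 0) / Rcoeff_den
                            * (T (j - i + r * (k - 1)) 0 / T (k * r) 0))%C).
    { rewrite Cprod_cons, thetaZn_0_at_0 by auto. unfold Cdiv. ring. }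
    apply Clim_mult; apply Clim_div; try apply Rcoeff_den_neq0; try exact HT.
    + apply Clim_Cprod_thetaZn.
    + apply Clim_const.
    + apply Clim_punctured0_comp_scal, thetaZn_continuous; auto.
    + apply Clim_punctured0_continuous, thetaZn_continuous; auto.
Qed.

Lemma Rcoeff_lim i j r : (0 <= r < n)%Z ->
  Clim punctured0 (fun t => Rcoeff n k eta t (IZR m * t) i j r) (sym_coeff n m i j r).
Proof.
  intro Hr. unfold sym_coeff.
  destruct (Z.eq_dec ((j - i - r) mod n) 0) as [Hs|Hs].
  - rewrite (proj2 (eqmod_iff_mod_sub n r (j - i) ltac:(lia))) by exact Hs.
    eapply Clim_eq_limit; [|apply Rcoeff_lim_of_eqmod; auto].
    destruct (r =? 0)%Z; unfold Defs.ind; C_by_parts.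
  - destruct (eqmod n r (j - i)) eqn:E; [apply eqmod_iff_mod_sub in E; [contradiction | lia]|].
    eapply Clim_eq_limit; [|apply Rcoeff_lim_of_neqmod; auto].
    destruct (r =? 0)%Z; unfold Defs.ind; C_by_parts.
Qed.

End RMatrix.

Lemma not_in_lattice_neq0 n eta tau : ~ in_lattice_n n eta tau -> tau <> 0.
Proof. intros H E. apply H. exists 0%Z, 0%Z. rewrite E. C_by_parts. Qed.

Theorem proposition5p2 :
  forall (n k : Z) (eta : C),
    (1 <= k < n)%Z -> Z.gcd n k = 1%Z -> 0 < Im eta ->
    forall m : Z,
    forall i j a b : Z,
      (0 <= i < n)%Z -> (0 <= j < n)%Z -> (0 <= a < n)%Z -> (0 <= b < n)%Z ->
      filterlim (fun tau : C => Rmat n k eta tau (Cmult (RtoC (IZR m)) tau) i j a b)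
                (within (fun tau : C => ~ in_lattice_n n eta tau) (locally (RtoC 0)))
                (locally (symmat n m i j a b)).
Proof.
  (* the range conditions on [i j a b] are not needed: indices only enter modulo [n] *)
  intros n k eta Hk Hg Heta m i j a b _ _ _ _.
  apply filterlim_of_Clim_punctured0; [intros tau; apply not_in_lattice_neq0|].
  rewrite symmat_eq_Csum by lia. unfold Rmat.
  apply Clim_Csum. intros r Hr. apply In_Zrange in Hr.
  apply Clim_mult; [apply Rcoeff_lim; auto | apply Clim_const].
Qed.
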